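(* Let $\Sigma$ be a connected orientable compact surface with $n$ boundary components $\{1,\dots,n\}$, $T$ an ideal triangulation with edges $E$ and faces $F$, and $l^0\in\mathbb{R}_{>0}^{|E|}$ a hyperbolic metric on $(\Sigma,T)$. The combinatorial Yamabe flow $$\frac{dw_i(t)}{dt}=B_i(t),\qquad w_i(0)=0,\qquad i=1,\dots,n,$$ has a solution for $t\in[0,\infty)$. Along this flow, the initial hyperbolic surface with geodesic boundary converges to a complete hyperbolic surface with cusps (i.e. the boundary lengths $B_i(t)$ tend to $0$ and each face's right-angled hexagon converges to a hyperbolic ideal triangle as $t\to\infty$).
   Context: An ideal triangulation: glue finitely many hexagons, each with three pairwise non-adjacent sides colored red, along red sides in pairs; faces are the images of hexagons, edges the images of red sides. Each edge joins boundary components $i,j$ and is denoted $ij$; each face meets boundary components $i,j,k$ and is denoted $ijk$. A hyperbolic metric is a vector $l\in\mathbb{R}_{>0}^{|E|}$; each face $ijk$ is realized as the unique hyperbolic right-angled hexagon with pairwise non-adjacent sides of lengths $l_{jk},l_{ki},l_{ij}$, and $\theta^i_{jk}$ is the length of the side on boundary component $i$ (opposite to $jk$). For $w\in\mathbb{R}^n$, the metric $l$ is defined by $\cosh\frac{l_{ij}}{2}=e^{w_i+w_j}\cosh\frac{l^0_{ij}}{2}$ (required positive), and $B_i=\sum_{ijk\in F}\theta^i_{jk}$ is the length of boundary component $i$. *)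

From Stdlib Require Import Reals List Arith.
From Coquelicot Require Import Coquelicot.
Import ListNotations.
Open Scope R_scope.

Definition arccosh (y : R) : R := ln (y + sqrt (y * y - 1)).

(* Combinatorial data of an ideal triangulation (paper's notation):
   - boundary components are 0..n-1, edges 0..nE-1, faces 0..nF-1;
   - [corner f k] (k in {0,1,2}) is the boundary component containing the
     k-th boundary arc of hexagon f (so face f is "ijk" with
     i,j,k = corner f 0, corner f 1, corner f 2);
   - [side f k] is the edge that is the image of the red side of hexagon f
     opposite to the k-th boundary arc (it joins corner f (k+1) and
     corner f (k+2), indices mod 3);
   - [ends e] is the (unordered) pair of boundary components joined by e. *)
Definition corners_list (nF : nat) : list (nat * nat) :=
  list_prod (seq 0 nF) (seq 0 3).

Definition nxt (k : nat) : nat := (k + 1) mod 3.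
Definition nxt2 (k : nat) : nat := (k + 2) mod 3.

Definition same_unordered (p : nat * nat) (x y : nat) : Prop :=
  (fst p = x /\ snd p = y) \/ (fst p = y /\ snd p = x).

Definition ideal_triangulation (n nE nF : nat)
    (corner side : nat -> nat -> nat) (ends : nat -> nat * nat) : Prop :=
  (forall f k, (f < nF)%nat -> (k < 3)%nat -> (corner f k < n)%nat /\ (side f k < nE)%nat) /\
  (* red sides are glued in pairs: each edge is the image of exactly two red sides *)
  (forall e, (e < nE)%nat ->
     length (filter (fun p => Nat.eqb (side (fst p) (snd p)) e) (corners_list nF)) = 2%nat) /\
  (* each edge joins the boundary components met by the two ends of its red sides *)
  (forall f k, (f < nF)%nat -> (k < 3)%nat ->
     same_unordered (ends (side f k)) (corner f (nxt k)) (corner f (nxt2 k))) /\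
  (forall i, (i < n)%nat -> exists f k, (f < nF)%nat /\ (k < 3)%nat /\ corner f k = i).

(* The metric l = l(w):  cosh (l_ij / 2) = e^{w_i + w_j} cosh (l0_ij / 2). *)
Definition cosh_half_len (l0 : nat -> R) (ends : nat -> nat * nat)
    (w : nat -> R) (e : nat) : R :=
  exp (w (fst (ends e)) + w (snd (ends e))) * cosh (l0 e / 2).

(* well-definedness: l_e > 0, i.e. cosh(l_e/2) > 1, for every edge *)
Definition metric_ok (nE : nat) (l0 : nat -> R) (ends : nat -> nat * nat)
    (w : nat -> R) : Prop :=
  forall e, (e < nE)%nat -> 1 < cosh_half_len l0 ends w e.

Definition len (l0 : nat -> R) (ends : nat -> nat * nat) (w : nat -> R) (e : nat) : R :=
  2 * arccosh (cosh_half_len l0 ends w e).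

(* Side length of the right-angled hexagon f on boundary component corner f k,
   opposite to the red side side f k (cosine rule for right-angled hexagons):
   cosh θ^i_{jk} = (cosh l_jk + cosh l_ij cosh l_ik) / (sinh l_ij sinh l_ik). *)
Definition theta (l0 : nat -> R) (ends : nat -> nat * nat) (side : nat -> nat -> nat)
    (w : nat -> R) (f k : nat) : R :=
  let a := len l0 ends w (side f k) in
  let b := len l0 ends w (side f (nxt k)) in
  let c := len l0 ends w (side f (nxt2 k)) in
  arccosh ((cosh a + cosh b * cosh c) / (sinh b * sinh c)).

(* Length of boundary component i: B_i = sum over faces ijk of θ^i_{jk}
   (a face meeting i at several corners contributes each corner). *)
Definition Blen (nF : nat) (l0 : nat -> R) (ends : nat -> nat * nat)
    (corner side : nat -> nat -> nat) (w : nat -> R) (i : nat) : R :=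
  fold_right Rplus 0
    (map (fun p => if Nat.eqb (corner (fst p) (snd p)) i
                   then theta l0 ends side w (fst p) (snd p) else 0)
         (corners_list nF)).

(* The flow is the ODE [w' = B w] for a vector field [B] that is nonnegative, grows at most
   linearly and is Lipschitz on every box [[0, M]^n].  Picard iteration converges on every
   [[0, T]]: all iterates stay in the box [[0, u t]] with [u' = A + C u], so a single Lipschitz
   constant serves on [[0, T]], and the iterates are dominated by the exponential series.
   Since [B >= 0], each [w_i] is nondecreasing; boundary component [i] carries some arc
   [theta^i_jk], which stays above a positive bound while [w_i <= W], hence [w_i -> oo].
   Finally, for [w >= 0] the arc [theta^i_jk] is bounded by a function of [exp w_i] that tends
   to [0], so every hexagon degenerates and the boundary lengths, sums of such arcs, vanish. *)

From Stdlib Require Import Reals Lra Lia List Arith.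
From Coquelicot Require Import Coquelicot.
Open Scope R_scope.

Lemma ball_R (x e y : R) : ball x e y <-> Rabs (y - x) < e.
Proof. reflexivity. Qed.

Lemma exp_le x y : x <= y -> exp x <= exp y.
Proof. intros [H| ->]; [left; apply exp_increasing, H | right; reflexivity]. Qed.

Lemma one_le_exp x : 0 <= x -> 1 <= exp x.
Proof. intros H. rewrite <- exp_0. apply exp_le, H. Qed.

Lemma continuous_of_is_derive (f : R -> R) x l : is_derive f x l -> continuous f x.
Proof.
  intros H. apply (@ex_derive_continuous R_AbsRing R_NormedModule). exists l. exact H.
Qed.

Lemma Rabs_Rmax0_sub s t : Rabs (Rmax 0 s - Rmax 0 t) <= Rabs (s - t).
Proof.
  unfold Rmax. destruct (Rle_dec 0 s), (Rle_dec 0 t);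
  unfold Rabs; repeat destruct Rcase_abs; lra.
Qed.

Lemma continuous_comp_Rmax0 (f : R -> R) z :
  continuous f (Rmax 0 z) -> continuous (fun s => f (Rmax 0 s)) z.
Proof.
  intros Hf. apply (continuous_comp (fun s => Rmax 0 s) f); [|exact Hf].
  apply filterlim_locally. intros eps. exists eps. intros s Hs.
  apply ball_R. eapply Rle_lt_trans; [apply Rabs_Rmax0_sub | exact Hs].
Qed.

Lemma is_lim_seq_bounded (u : nat -> R) (l a b : R) :
  (forall k, a <= u k <= b) -> is_lim_seq u l -> a <= l <= b.
Proof.
  intros Hu Hl. split.
  - exact (is_lim_seq_le (fun _ => a) u a l (fun k => proj1 (Hu k)) (is_lim_seq_const a) Hl).
  - exact (is_lim_seq_le u (fun _ => b) l b (fun k => proj2 (Hu k)) Hl (is_lim_seq_const b)).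
Qed.

Lemma lipschitz_of_derive_bound (h dh : R -> R) a b K :
  (forall z, a <= z <= b -> is_derive h z (dh z)) ->
  (forall z, a <= z <= b -> Rabs (dh z) <= K) ->
  forall u v, a <= u <= b -> a <= v <= b -> Rabs (h u - h v) <= K * Rabs (u - v).
Proof.
  intros Hd HK u v Hu Hv.
  assert (Hm1 : a <= Rmin v u) by (unfold Rmin; destruct Rle_dec; lra).
  assert (Hm2 : Rmax v u <= b) by (unfold Rmax; destruct Rle_dec; lra).
  destruct (MVT_gen h v u dh) as [c [Hc ->]].
  - intros x Hx. apply Hd. lra.
  - intros x Hx. apply continuity_pt_filterlim, (continuous_of_is_derive _ _ _ (Hd x ltac:(lra))).
  - rewrite Rabs_mult. apply Rmult_le_compat_r; [apply Rabs_pos | apply HK; lra].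
Qed.

Lemma abs_RInt_le_of_le (h b : R -> R) a c B :
  a <= c -> ex_RInt h a c -> is_RInt b a c B ->
  (forall x, a < x < c -> Rabs (h x) <= b x) -> Rabs (RInt h a c) <= B.
Proof.
  intros Hac Hh Hb Hx.
  assert (Hnb : is_RInt (fun x => - b x) a c (- B)) by exact (@is_RInt_opp R_NormedModule _ _ _ _ Hb).
  rewrite <- (is_RInt_unique _ _ _ _ Hb).
  assert (Enb : RInt (fun x => - b x) a c = - RInt b a c).
  { rewrite (is_RInt_unique _ _ _ _ Hb). exact (is_RInt_unique _ _ _ _ Hnb). }
  apply Rabs_le. split.
  - rewrite <- Enb. apply RInt_le; [exact Hac | eexists; exact Hnb | exact Hh |].
    intros x Hx'. specialize (Hx x Hx'). apply Rabs_le_between in Hx. lra.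
  - apply RInt_le; [exact Hac | exact Hh | eexists; exact Hb |].
    intros x Hx'. specialize (Hx x Hx'). apply Rabs_le_between in Hx. lra.
Qed.

Lemma ex_RInt_of_continuous (h : R -> R) a b : (forall z, continuous h z) -> ex_RInt h a b.
Proof. intros Hh. apply (@ex_RInt_continuous R_CompleteNormedModule). intros z _. apply Hh. Qed.

Lemma is_derive_RInt_of_continuous (h : R -> R) t :
  (forall z, continuous h z) -> is_derive (fun s => RInt h 0 s) t (h t).
Proof.
  intros Hh. apply (@is_derive_RInt R_NormedModule h (fun s => RInt h 0 s) 0 t); [| apply Hh].
  apply filter_forall. intros b. apply (@RInt_correct R_CompleteNormedModule).
  apply ex_RInt_of_continuous, Hh.
Qed.

(* Rewriting real goals with the generic [RInt_minus], stated with [minus], is very slow. *)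
Lemma RInt_Rminus (f g : R -> R) a b : ex_RInt f a b -> ex_RInt g a b ->
  RInt (fun x => f x - g x) a b = RInt f a b - RInt g a b.
Proof. exact (@RInt_minus R_CompleteNormedModule f g a b). Qed.

Lemma is_RInt_monomial c m t :
  is_RInt (fun s => c * s ^ m) 0 t (c * t ^ S m / INR (S m)).
Proof.
  assert (Hm : INR (S m) <> 0) by (apply not_0_INR; lia).
  replace (c * t ^ S m / INR (S m))
    with (minus (c * t ^ S m / INR (S m)) (c * 0 ^ S m / INR (S m))).
  2: { rewrite pow_i by lia. unfold minus, plus, opp; simpl. field. exact Hm. }
  apply (@is_RInt_derive R_CompleteNormedModule (fun s => c * s ^ S m / INR (S m))).
  - intros x _. auto_derive; [exact I |].
    change (match m with 0%nat => 1 | S _ => INR m + 1 end) with (INR (S m)). field. exact Hm.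
  - intros x _. apply continuity_pt_filterlim, derivable_continuous_pt. reg.
Qed.

Definition in_box (n : nat) (M : R) (x : nat -> R) : Prop :=
  forall j, (j < n)%nat -> 0 <= x j <= M.

Definition close (n : nat) (d : R) (x y : nat -> R) : Prop :=
  forall j, (j < n)%nat -> Rabs (x j - y j) <= d.

Definition lipschitz_on_box (n : nat) (M L : R) (F : (nat -> R) -> R) : Prop :=
  forall x y d, in_box n M x -> in_box n M y -> 0 <= d -> close n d x y ->
    Rabs (F x - F y) <= L * d.

Lemma in_box_le n M M' x : M <= M' -> in_box n M x -> in_box n M' x.
Proof. intros H Hx j Hj. specialize (Hx j Hj). lra. Qed.

Lemma filter_forall_lt {T : Type} (F : (T -> Prop) -> Prop) {FF : Filter F}
    (n : nat) (P : nat -> T -> Prop) :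
  (forall j, (j < n)%nat -> F (P j)) -> F (fun s => forall j, (j < n)%nat -> P j s).
Proof.
  induction n as [|n IH]; intros H.
  - apply filter_forall. intros s j Hj. lia.
  - apply (filter_imp (fun s => (forall j, (j < n)%nat -> P j s) /\ P n s)).
    + intros s [H1 H2] j Hj.
      destruct (Nat.eq_dec j n) as [->|Hne]; [exact H2 | apply H1; lia].
    + apply filter_and; [apply IH; intros j Hj |]; apply H; lia.
Qed.

Lemma continuous_lipschitz_on_box_comp n M L (F : (nat -> R) -> R) (p : R -> nat -> R) z :
  0 <= L -> lipschitz_on_box n M L F ->
  (forall j, (j < n)%nat -> continuous (fun s => p s j) z) ->
  locally z (fun s => in_box n M (p s)) ->
  continuous (fun s => F (p s)) z.
Proof.
  intros HL HF Hp Hbox. apply filterlim_locally. intros eps.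
  assert (Hd : 0 < eps / (L + 1)) by (apply Rdiv_lt_0_compat; [apply cond_pos | lra]).
  assert (Hz : in_box n M (p z)) by exact (locally_singleton _ _ Hbox).
  assert (Hclose : locally z (fun s => forall j, (j < n)%nat -> ball (p z j) (eps / (L + 1)) (p s j))).
  { apply (filter_forall_lt (locally z) n (fun j s => ball (p z j) (eps / (L + 1)) (p s j))).
    intros j Hj.
    exact (proj1 (filterlim_locally _ _) (Hp j Hj) (mkposreal _ Hd)). }
  generalize (filter_and _ _ Hbox Hclose). apply filter_imp. intros s [Hs Hc].
  apply ball_R. apply Rle_lt_trans with (L * (eps / (L + 1))).
  - apply HF; [exact Hs | exact Hz | lra |]. intros j Hj. left. apply Hc, Hj.
  - apply Rlt_le_trans with ((L + 1) * (eps / (L + 1))); [nra |].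
    right. field. lra.
Qed.

Lemma continuous_of_lipschitz_at (g : R -> R) z K : 0 <= K ->
  (forall s, Rabs (s - z) < 1 -> Rabs (g s - g z) <= K * Rabs (s - z)) -> continuous g z.
Proof.
  intros HK Hg. apply filterlim_locally. intros eps.
  assert (Hd : 0 < Rmin 1 (eps / (K + 1)))
    by (apply Rmin_pos; [lra | apply Rdiv_lt_0_compat; [apply cond_pos | lra]]).
  assert (H1 := Rmin_l 1 (eps / (K + 1))). assert (H2 := Rmin_r 1 (eps / (K + 1))).
  exists (mkposreal _ Hd). intros s Hs. change (Rabs (s - z) < Rmin 1 (eps / (K + 1))) in Hs.
  change (Rabs (g s - g z) < eps).
  eapply Rle_lt_trans; [apply Hg; lra |].
  apply Rle_lt_trans with (K * (eps / (K + 1))); [apply Rmult_le_compat_l; lra |].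
  assert (0 < eps / (K + 1)) by lra.
  apply Rlt_le_trans with ((K + 1) * (eps / (K + 1))); [nra | right; field; lra].
Qed.

(** * Existence of the flow by Picard iteration *)

Definition box_lipschitz (n : nat) (G : (nat -> R) -> nat -> R) : Prop :=
  forall M, 0 <= M -> exists L, 0 <= L /\
    forall i, (i < n)%nat -> lipschitz_on_box n M L (fun x => G x i).

Definition nonneg_linear_growth (n : nat) (G : (nat -> R) -> nat -> R) (A C : R) : Prop :=
  forall M x i, 0 <= M -> in_box n M x -> (i < n)%nat -> 0 <= G x i <= A + C * M.

(* The solution of [u' = A + C u], [u 0 = 0]: an a priori bound for the flow. *)
Definition growth_bound (A C t : R) : R := A / C * (exp (C * t) - 1).

Lemma growth_bound_nonneg A C t : 0 <= A -> 0 < C -> 0 <= t -> 0 <= growth_bound A C t.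
Proof.
  intros HA HC Ht. unfold growth_bound.
  assert (1 <= exp (C * t)) by (apply one_le_exp; nra).
  apply Rmult_le_pos; [apply Rmult_le_pos; [exact HA | apply Rlt_le, Rinv_0_lt_compat, HC] | lra].
Qed.

Lemma growth_bound_le A C s t : 0 <= A -> 0 < C -> s <= t ->
  growth_bound A C s <= growth_bound A C t.
Proof.
  intros HA HC Hst. unfold growth_bound. apply Rmult_le_compat_l.
  - apply Rmult_le_pos; [exact HA | apply Rlt_le, Rinv_0_lt_compat, HC].
  - assert (exp (C * s) <= exp (C * t)) by (apply exp_le; nra). lra.
Qed.

Lemma is_RInt_growth_bound A C t : 0 < C ->
  is_RInt (fun s => A + C * growth_bound A C s) 0 t (growth_bound A C t).
Proof.
  intros HC.
  apply is_RInt_ext with (fun s => A * exp (C * s)).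
  { intros x _. change (A * exp (C * x) = A + C * growth_bound A C x).
    unfold growth_bound. field. lra. }
  replace (growth_bound A C t)
    with (minus (A / C * exp (C * t)) (A / C * exp (C * 0))).
  2: { unfold minus, plus, opp, growth_bound; simpl. rewrite Rmult_0_r, exp_0. ring. }
  apply (@is_RInt_derive R_CompleteNormedModule (fun s => A / C * exp (C * s))).
  - intros x _. auto_derive; [exact I | field; lra].
  - intros x _. apply continuity_pt_filterlim, derivable_continuous_pt. reg.
Qed.

Section Picard.

Variables (n : nat) (G : (nat -> R) -> nat -> R) (A C : R).
Hypotheses (A_nonneg : 0 <= A) (C_pos : 0 < C).
Hypothesis G_lipschitz : box_lipschitz n G.
Hypothesis G_growth : nonneg_linear_growth n G A C.

(* Evaluating the iterates at [Rmax 0 s] keeps every integrand continuous on all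
   of [R], which is what the fundamental theorem of calculus in Coquelicot needs. *)
Fixpoint picard (k : nat) : R -> nat -> R :=
  match k with
  | O => fun _ _ => 0
  | S k => fun t i => RInt (fun s => G (picard k (Rmax 0 s)) i) 0 t
  end.

Definition picard_limit (t : R) (i : nat) : R := real (Lim_seq (fun k => picard k t i)).

Definition max_speed (T : R) : R := A + C * growth_bound A C T.

Lemma max_speed_nonneg T : 0 <= T -> 0 <= max_speed T.
Proof.
  intros HT. unfold max_speed.
  assert (0 <= growth_bound A C T) by (apply growth_bound_nonneg; lra). nra.
Qed.

Lemma G_bounded T x i : 0 <= T -> in_box n (growth_bound A C T) x -> (i < n)%nat ->
  0 <= G x i <= max_speed T.
Proof. intros HT Hx Hi. apply G_growth; [apply growth_bound_nonneg | |]; assumption. Qed.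

Lemma continuous_G_comp_Rmax0 (p : R -> nat -> R) i z :
  (i < n)%nat ->
  (forall j, (j < n)%nat -> continuous (fun s => p (Rmax 0 s) j) z) ->
  (forall t, 0 <= t -> in_box n (growth_bound A C t) (p t)) ->
  continuous (fun s => G (p (Rmax 0 s)) i) z.
Proof.
  intros Hi Hp Hbox.
  set (M := growth_bound A C (Rmax 0 z + 1)).
  assert (HM : 0 <= M) by (apply growth_bound_nonneg; try assert (H := Rmax_l 0 z); lra).
  destruct (G_lipschitz M HM) as [L [HL HGL]].
  apply (continuous_lipschitz_on_box_comp n M L (fun x => G x i)); auto.
  exists (mkposreal 1 Rlt_0_1). intros s Hs. change (Rabs (s - z) < 1) in Hs.
  apply in_box_le with (growth_bound A C (Rmax 0 s)); [| apply Hbox, Rmax_l].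
  apply growth_bound_le; auto.
  assert (H := Rabs_Rmax0_sub s z). apply Rabs_le_between in H. lra.
Qed.

Definition picard_invariant (k : nat) : Prop :=
  (forall j t, (j < n)%nat -> continuous (fun s => picard k s j) t) /\
  (forall t, 0 <= t -> in_box n (growth_bound A C t) (picard k t)).

Lemma continuous_picard_integrand k i z : picard_invariant k -> (i < n)%nat ->
  continuous (fun s => G (picard k (Rmax 0 s)) i) z.
Proof.
  intros [Hc Hb] Hi. apply continuous_G_comp_Rmax0; auto.
  intros j Hj. apply (continuous_comp_Rmax0 (fun s => picard k s j)), Hc, Hj.
Qed.

Lemma is_derive_picard k i t : picard_invariant k -> (i < n)%nat ->
  is_derive (fun s => picard (S k) s i) t (G (picard k (Rmax 0 t)) i).
Proof.
  intros HI Hi. apply is_derive_RInt_of_continuous.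
  intros z. apply continuous_picard_integrand; assumption.
Qed.

Lemma picard_invariant_all k : picard_invariant k.
Proof.
  induction k as [|k IH].
  - split; [intros; apply continuous_const | intros t Ht j Hj; simpl].
    split; [lra | apply growth_bound_nonneg; assumption].
  - split.
    + intros j t Hj. apply (continuous_of_is_derive _ _ _ (is_derive_picard k j t IH Hj)).
    + intros t Ht j Hj. simpl.
      assert (Hex : ex_RInt (fun s => G (picard k (Rmax 0 s)) j) 0 t).
      { apply ex_RInt_of_continuous. intros z. apply continuous_picard_integrand; assumption. }
      assert (Hint : forall x, 0 <= x <= t ->
                0 <= G (picard k (Rmax 0 x)) j <= A + C * growth_bound A C x).
      { intros x Hx. rewrite Rmax_right by lra.
        apply G_growth; [apply growth_bound_nonneg; lra | apply IH; lra | exact Hj]. }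
      split.
      * apply RInt_ge_0; [exact Ht | exact Hex |]. intros x Hx. apply Hint. lra.
      * rewrite <- (is_RInt_unique _ _ _ _ (is_RInt_growth_bound A C t C_pos)).
        apply RInt_le; [exact Ht | exact Hex | eexists; apply is_RInt_growth_bound, C_pos |].
        intros x Hx. apply Hint. lra.
Qed.

Lemma picard_in_box k t : 0 <= t -> in_box n (growth_bound A C t) (picard k t).
Proof. apply (picard_invariant_all k). Qed.

Lemma picard_in_box_le k t T : 0 <= t <= T -> in_box n (growth_bound A C T) (picard k t).
Proof.
  intros Ht. apply in_box_le with (growth_bound A C t);
    [apply growth_bound_le; lra | apply picard_in_box; lra].
Qed.

Lemma ex_RInt_picard_integrand k i a b : (i < n)%nat ->
  ex_RInt (fun s => G (picard k (Rmax 0 s)) i) a b.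
Proof.
  intros Hi. apply ex_RInt_of_continuous. intros z.
  apply continuous_picard_integrand; [apply picard_invariant_all | exact Hi].
Qed.

Lemma picard_time_lipschitz T k s t i : 0 <= s <= T -> 0 <= t <= T -> (i < n)%nat ->
  Rabs (picard k s i - picard k t i) <= max_speed T * Rabs (s - t).
Proof.
  intros Hs Ht Hi. destruct k as [|k].
  - simpl. rewrite Rminus_diag, Rabs_R0.
    apply Rmult_le_pos; [apply max_speed_nonneg; lra | apply Rabs_pos].
  - apply (lipschitz_of_derive_bound (fun x => picard (S k) x i)
             (fun x => G (picard k (Rmax 0 x)) i) 0 T);
      [| | exact Hs | exact Ht].
    + intros z _. apply is_derive_picard; [apply picard_invariant_all | exact Hi].
    + intros z Hz. rewrite Rmax_right by lra.
      destruct (G_bounded T (picard k z) i) as [H1 H2]; [lra | | exact Hi |].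
      * apply in_box_le with (growth_bound A C z);
          [apply growth_bound_le; lra | apply picard_in_box; lra].
      * rewrite Rabs_right; lra.
Qed.

Section Convergence.

Variables (T L : R).
Hypotheses (T_nonneg : 0 <= T) (L_nonneg : 0 <= L).
Hypothesis G_lipschitz_T :
  forall i, (i < n)%nat -> lipschitz_on_box n (growth_bound A C T) L (fun x => G x i).

Lemma picard_step_bound k t i : 0 <= t <= T -> (i < n)%nat ->
  Rabs (picard (S k) t i - picard k t i) <=
    max_speed T * L ^ k * t ^ S k / INR (fact (S k)).
Proof.
  assert (HK := max_speed_nonneg T T_nonneg).
  revert t i. induction k as [|k IH]; intros t i Ht Hi.
  - simpl picard at 2. rewrite Rminus_0_r.
    replace (max_speed T * L ^ 0 * t ^ 1 / INR (fact 1))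
      with (max_speed T * t ^ 1 / INR 1) by (simpl; field).
    change (picard 1 t i) with (RInt (fun s => G (picard 0 (Rmax 0 s)) i) 0 t).
    apply abs_RInt_le_of_le with (b := fun s => max_speed T * s ^ 0);
      [lra | apply ex_RInt_picard_integrand, Hi | apply is_RInt_monomial |].
    intros x _. simpl. rewrite Rmult_1_r.
    destruct (G_bounded T (fun _ => 0) i) as [H1 H2];
      [lra | intros j _; split; [lra | apply growth_bound_nonneg; lra] | exact Hi |].
    rewrite Rabs_right; lra.
  - set (c := max_speed T * L ^ S k / INR (fact (S k))).
    replace (max_speed T * L ^ S k * t ^ S (S k) / INR (fact (S (S k))))
      with (c * t ^ S (S k) / INR (S (S k))).
    2: { unfold c. rewrite (fact_simpl (S k)), mult_INR. field.
         split; [apply INR_fact_neq_0 | apply not_0_INR; lia]. }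
    change (picard (S (S k)) t i) with (RInt (fun s => G (picard (S k) (Rmax 0 s)) i) 0 t).
    change (picard (S k) t i) with (RInt (fun s => G (picard k (Rmax 0 s)) i) 0 t).
    rewrite <- RInt_Rminus by (apply ex_RInt_picard_integrand, Hi).
    apply abs_RInt_le_of_le with (b := fun s => c * s ^ S k);
      [lra | apply (@ex_RInt_minus R_NormedModule); apply ex_RInt_picard_integrand, Hi
      | apply is_RInt_monomial |].
    intros x Hx. rewrite Rmax_right by lra.
    replace (c * x ^ S k)
      with (L * (max_speed T * L ^ k * x ^ S k / INR (fact (S k)))).
    2: { unfold c. simpl pow. field. apply INR_fact_neq_0. }
    apply G_lipschitz_T; [exact Hi | | | | intros j Hj; apply IH; [lra | exact Hj]].
    + apply picard_in_box_le; lra.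
    + apply picard_in_box_le; lra.
    + assert (0 <= x ^ S k) by (apply pow_le; lra).
      assert (0 < / INR (fact (S k))) by apply Rinv_0_lt_compat, INR_fact_lt_0.
      assert (0 <= L ^ k) by (apply pow_le; lra).
      unfold Rdiv. apply Rmult_le_pos; [apply Rmult_le_pos; [apply Rmult_le_pos |] |]; lra.
Qed.

Definition exp_partial_sum (x : R) (q : nat) : R := sum_f_R0 (fun m => x ^ m / INR (fact m)) q.

Lemma is_lim_seq_exp_partial_sum x : is_lim_seq (exp_partial_sum x) (exp x).
Proof.
  apply is_lim_seq_Reals. apply Un_cv_ext with (E1 x); [| apply E1_cvg].
  intros N. unfold E1, exp_partial_sum. apply sum_eq. intros i _. unfold Rdiv. ring.
Qed.

Definition picard_error (q : nat) : R :=
  max_speed T * T * (exp (L * T) - exp_partial_sum (L * T) q).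

Lemma picard_error_nonneg q : 0 <= picard_error q.
Proof.
  unfold picard_error.
  assert (exp_partial_sum (L * T) q <= exp (L * T)) by (apply exp_ge_taylor; nra).
  assert (0 <= max_speed T * T) by (apply Rmult_le_pos; [apply max_speed_nonneg |]; lra). nra.
Qed.

Lemma is_lim_seq_picard_error : is_lim_seq picard_error 0.
Proof.
  replace (Finite 0) with (Rbar_mult (max_speed T * T) (exp (L * T) - exp (L * T)))
    by (simpl; f_equal; ring).
  apply is_lim_seq_scal_l, is_lim_seq_minus';
    [apply is_lim_seq_const | apply is_lim_seq_exp_partial_sum].
Qed.

Lemma picard_step_bound_uniform k t i : 0 <= t <= T -> (i < n)%nat ->
  Rabs (picard (S k) t i - picard k t i) <= max_speed T * T * ((L * T) ^ k / INR (fact k)).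
Proof.
  intros Ht Hi. eapply Rle_trans; [apply picard_step_bound; assumption |].
  assert (HK := max_speed_nonneg T T_nonneg).
  assert (Hf : INR (fact k) <= INR (fact (S k))).
  { rewrite fact_simpl, mult_INR. assert (H := INR_fact_lt_0 k).
    assert (1 <= INR (S k)) by (apply (le_INR 1); lia). nra. }
  assert (Hf0 := INR_fact_lt_0 k).
  assert (Htk : t * t ^ k <= T * T ^ k)
    by (apply Rmult_le_compat; [lra | apply pow_le; lra | lra | apply pow_incr; lra]).
  assert (HLk := pow_le L k L_nonneg).
  assert (0 <= t * t ^ k) by (apply Rmult_le_pos; [lra | apply pow_le; lra]).
  rewrite Rpow_mult_distr. simpl pow. unfold Rdiv.
  apply Rle_trans with (max_speed T * L ^ k * (T * T ^ k) * / INR (fact (S k))).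
  - apply Rmult_le_compat_r; [apply Rlt_le, Rinv_0_lt_compat, INR_fact_lt_0 |].
    apply Rmult_le_compat_l; [nra | exact Htk].
  - replace (max_speed T * T * (L ^ k * T ^ k * / INR (fact k)))
      with (max_speed T * L ^ k * (T * T ^ k) * / INR (fact k)) by ring.
    apply Rmult_le_compat_l; [| apply Rinv_le_contravar; assumption].
    apply Rmult_le_pos; [apply Rmult_le_pos; assumption |].
    apply Rmult_le_pos; [lra | apply pow_le; lra].
Qed.

Lemma picard_tail_bound q p t i : (S q <= p)%nat -> 0 <= t <= T -> (i < n)%nat ->
  Rabs (picard p t i - picard (S q) t i) <= picard_error q.
Proof.
  intros Hp Ht Hi.
  assert (Htail : forall d, Rabs (picard (S q + d) t i - picard (S q) t i) <=
            max_speed T * T * (exp_partial_sum (L * T) (q + d) - exp_partial_sum (L * T) q)).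
  { induction d as [|d IH].
    - rewrite !Nat.add_0_r, !Rminus_diag, Rabs_R0. lra.
    - replace (S q + S d)%nat with (S (S q + d)) by lia.
      replace (q + S d)%nat with (S (q + d)) by lia.
      replace (picard (S (S q + d)) t i - picard (S q) t i) with
        ((picard (S (S q + d)) t i - picard (S q + d) t i)
         + (picard (S q + d) t i - picard (S q) t i)) by ring.
      eapply Rle_trans; [apply Rabs_triang |].
      assert (Hs : Rabs (picard (S (S q + d)) t i - picard (S q + d) t i) <=
                   max_speed T * T * ((L * T) ^ S (q + d) / INR (fact (S (q + d))))).
      { replace (S (q + d)) with (S q + d)%nat by lia. apply picard_step_bound_uniform; assumption. }
      change (exp_partial_sum (L * T) (S (q + d))) with
        (exp_partial_sum (L * T) (q + d) + (L * T) ^ S (q + d) / INR (fact (S (q + d)))).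
      lra. }
  replace p with (S q + (p - S q))%nat by lia.
  eapply Rle_trans; [apply Htail |]. unfold picard_error.
  apply Rmult_le_compat_l; [apply Rmult_le_pos; [apply max_speed_nonneg |]; lra |].
  assert (exp_partial_sum (L * T) (q + (p - S q)) <= exp (L * T)) by (apply exp_ge_taylor; nra).
  lra.
Qed.

Lemma is_lim_seq_picard t i : 0 <= t <= T -> (i < n)%nat ->
  is_lim_seq (fun k => picard k t i) (picard_limit t i).
Proof.
  intros Ht Hi.
  assert (Hex : ex_finite_lim_seq (fun k => picard k t i)).
  { apply ex_lim_seq_cauchy_corr. intros eps.
    assert (Herr := is_lim_seq_picard_error). apply is_lim_seq_Reals in Herr.
    destruct (Herr (eps / 2)) as [N HN]; [apply Rdiv_lt_0_compat; [apply cond_pos | lra] |].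
    exists (S N). intros p m Hp Hm.
    specialize (HN N (le_n N)). unfold R_dist in HN.
    rewrite Rminus_0_r, Rabs_right in HN by (apply Rle_ge, picard_error_nonneg).
    replace (picard p t i - picard m t i) with
      ((picard p t i - picard (S N) t i) - (picard m t i - picard (S N) t i)) by ring.
    eapply Rle_lt_trans; [apply Rabs_triang |]. rewrite Rabs_Ropp.
    assert (H1 := picard_tail_bound N p t i Hp Ht Hi).
    assert (H2 := picard_tail_bound N m t i Hm Ht Hi). lra. }
  destruct Hex as [l Hl].
  unfold picard_limit. rewrite (is_lim_seq_unique _ _ Hl). exact Hl.
Qed.

Lemma picard_limit_error q t i : 0 <= t <= T -> (i < n)%nat ->
  Rabs (picard_limit t i - picard (S q) t i) <= picard_error q.
Proof.
  intros Ht Hi.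
  assert (Hl := is_lim_seq_picard t i Ht Hi).
  apply (is_lim_seq_incr_n _ (S q)) in Hl.
  apply Rabs_le, (is_lim_seq_bounded (fun d => picard (d + S q) t i - picard (S q) t i)).
  - intros d. apply Rabs_le_between, picard_tail_bound; [lia | exact Ht | exact Hi].
  - apply (is_lim_seq_minus' _ (fun _ => picard (S q) t i)); [exact Hl | apply is_lim_seq_const].
Qed.

End Convergence.

Lemma is_lim_seq_picard_at t i : 0 <= t -> (i < n)%nat ->
  is_lim_seq (fun k => picard k t i) (picard_limit t i).
Proof.
  intros Ht Hi.
  destruct (G_lipschitz (growth_bound A C t)) as [L [HL HGL]];
    [apply growth_bound_nonneg; assumption |].
  apply (is_lim_seq_picard t L); auto; lra.
Qed.

Lemma picard_limit_0 i : picard_limit 0 i = 0.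
Proof.
  unfold picard_limit. rewrite (Lim_seq_ext _ (fun _ => 0)), Lim_seq_const; [reflexivity |].
  intros [|k]; [reflexivity | exact (RInt_point 0 _)].
Qed.

Lemma picard_limit_in_box t : 0 <= t -> in_box n (growth_bound A C t) (picard_limit t).
Proof.
  intros Ht j Hj. apply (is_lim_seq_bounded (fun k => picard k t j));
    [intros k; apply picard_in_box; assumption | apply is_lim_seq_picard_at; assumption].
Qed.

Lemma picard_limit_time_lipschitz T s t i : 0 <= s <= T -> 0 <= t <= T -> (i < n)%nat ->
  Rabs (picard_limit s i - picard_limit t i) <= max_speed T * Rabs (s - t).
Proof.
  intros Hs Ht Hi. apply Rabs_le.
  apply (is_lim_seq_bounded (fun k => picard k s i - picard k t i)).
  - intros k. apply Rabs_le_between, picard_time_lipschitz; assumption.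
  - apply is_lim_seq_minus'; apply is_lim_seq_picard_at; (lra || assumption).
Qed.

Lemma continuous_picard_limit_Rmax0 j z : (j < n)%nat ->
  continuous (fun s => picard_limit (Rmax 0 s) j) z.
Proof.
  intros Hj. set (T := Rmax 0 z + 1). assert (Hz := Rmax_l 0 z).
  apply (continuous_of_lipschitz_at _ _ (max_speed T)); [apply max_speed_nonneg; unfold T; lra |].
  intros s Hs. assert (Hm := Rabs_Rmax0_sub s z). assert (Hs0 := Rmax_l 0 s).
  eapply Rle_trans; [apply (picard_limit_time_lipschitz T) | apply Rmult_le_compat_l];
    [| | exact Hj | apply max_speed_nonneg; unfold T; lra | exact Hm];
    apply Rabs_le_between in Hm; unfold T; lra.
Qed.

Lemma continuous_picard_limit_integrand i z : (i < n)%nat ->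
  continuous (fun s => G (picard_limit (Rmax 0 s)) i) z.
Proof.
  intros Hi. apply continuous_G_comp_Rmax0; [exact Hi | | apply picard_limit_in_box].
  intros j Hj. apply continuous_picard_limit_Rmax0, Hj.
Qed.

Lemma ex_RInt_picard_limit_integrand i a b : (i < n)%nat ->
  ex_RInt (fun s => G (picard_limit (Rmax 0 s)) i) a b.
Proof.
  intros Hi. apply ex_RInt_of_continuous. intros z. apply continuous_picard_limit_integrand, Hi.
Qed.

Lemma picard_limit_integral t i : 0 <= t -> (i < n)%nat ->
  picard_limit t i = RInt (fun s => G (picard_limit (Rmax 0 s)) i) 0 t.
Proof.
  intros Ht Hi.
  destruct (G_lipschitz (growth_bound A C t)) as [L [HL HGL]];
    [apply growth_bound_nonneg; assumption |].
  set (E := Rabs (picard_limit t i - RInt (fun s => G (picard_limit (Rmax 0 s)) i) 0 t)).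
  assert (HE : forall q, E <= picard_error t L (S q) + L * picard_error t L q * t).
  { intros q. unfold E.
    replace (picard_limit t i - RInt (fun s => G (picard_limit (Rmax 0 s)) i) 0 t) with
      ((picard_limit t i - picard (S (S q)) t i)
       + (RInt (fun s => G (picard (S q) (Rmax 0 s)) i) 0 t
          - RInt (fun s => G (picard_limit (Rmax 0 s)) i) 0 t)) by (simpl; ring).
    eapply Rle_trans; [apply Rabs_triang |]. apply Rplus_le_compat.
    { apply picard_limit_error; auto; lra. }
    rewrite <- RInt_Rminus;
      [| apply ex_RInt_picard_integrand, Hi | apply ex_RInt_picard_limit_integrand, Hi].
    replace (L * picard_error t L q * t)
      with (L * picard_error t L q * t ^ 1 / INR 1) by (simpl; field).
    apply abs_RInt_le_of_le with (b := fun s => L * picard_error t L q * s ^ 0);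
      [exact Ht | | apply is_RInt_monomial |].
    { apply (@ex_RInt_minus R_NormedModule);
        [apply ex_RInt_picard_integrand | apply ex_RInt_picard_limit_integrand]; exact Hi. }
    intros x Hx. rewrite Rmax_right, pow_O, Rmult_1_r by lra.
    apply HGL; [exact Hi | | | apply picard_error_nonneg; lra |].
    - apply picard_in_box_le; lra.
    - apply in_box_le with (growth_bound A C x);
        [apply growth_bound_le; lra | apply picard_limit_in_box; lra].
    - intros j Hj. rewrite Rabs_minus_sym. apply picard_limit_error; auto; lra. }
  assert (Hlim : is_lim_seq (fun q => picard_error t L (S q) + L * picard_error t L q * t) 0).
  { replace (Finite 0) with (Finite (0 + L * 0 * t)) by (f_equal; ring).
    assert (Herr := is_lim_seq_picard_error t L).
    apply is_lim_seq_plus'; [exact (proj1 (is_lim_seq_incr_1 _ 0) Herr) |].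
    apply is_lim_seq_mult'; [apply is_lim_seq_mult'; [apply is_lim_seq_const | exact Herr]
                            | apply is_lim_seq_const]. }
  assert (HE0 : E <= 0) by exact (is_lim_seq_le (fun _ => E) _ E 0 HE (is_lim_seq_const E) Hlim).
  assert (0 <= E) by apply Rabs_pos. unfold E in *.
  apply Rminus_diag_uniq, Rabs_eq_0. lra.
Qed.

Lemma is_derive_picard_limit t i : 0 < t -> (i < n)%nat ->
  is_derive (fun s => picard_limit s i) t (G (picard_limit t) i).
Proof.
  intros Ht Hi. set (h := fun s => G (picard_limit (Rmax 0 s)) i).
  apply (is_derive_ext_loc (fun s => RInt h 0 s)).
  - apply (locally_interval _ t 0 p_infty); [simpl; lra | exact I |].
    intros y Hy _. symmetry. apply picard_limit_integral; [simpl in Hy; lra | exact Hi].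
  - replace (G (picard_limit t) i) with (h t) by (unfold h; rewrite Rmax_right by lra; reflexivity).
    apply is_derive_RInt_of_continuous. intros z. apply continuous_picard_limit_integrand, Hi.
Qed.

Lemma picard_limit_nondecreasing s t i : 0 <= s <= t -> (i < n)%nat ->
  picard_limit s i <= picard_limit t i.
Proof.
  intros Hst Hi.
  rewrite (picard_limit_integral s i), (picard_limit_integral t i) by (lra || exact Hi).
  rewrite <- (RInt_Chasles (V := R_CompleteNormedModule) _ 0 s t)
    by (apply ex_RInt_picard_limit_integrand, Hi).
  change (plus ?a ?b) with (a + b).
  assert (0 <= RInt (fun x => G (picard_limit (Rmax 0 x)) i) s t); [| lra].
  apply RInt_ge_0; [lra | apply ex_RInt_picard_limit_integrand, Hi |].
  intros x Hx. rewrite Rmax_right by lra.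
  apply (G_growth (growth_bound A C x));
    [apply growth_bound_nonneg | apply picard_limit_in_box | exact Hi]; lra.
Qed.

Lemma picard_limit_right_continuous_0 i : (i < n)%nat ->
  filterlim (fun s => picard_limit s i) (at_right 0) (locally (picard_limit 0 i)).
Proof.
  intros Hi. set (h := fun s => G (picard_limit (Rmax 0 s)) i).
  apply (filterlim_ext_loc (fun s => RInt h 0 s)).
  - exists (mkposreal 1 Rlt_0_1). intros y _ Hy. symmetry.
    apply picard_limit_integral; [lra | exact Hi].
  - assert (Hc : continuous (fun s => RInt h 0 s) 0).
    { apply (continuous_of_is_derive _ _ (h 0)), is_derive_RInt_of_continuous.
      intros z. apply continuous_picard_limit_integrand, Hi. }
    unfold continuous in Hc. rewrite RInt_point in Hc. rewrite picard_limit_0.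
    exact (filterlim_filter_le_1 _ (filter_le_within (F := locally 0) (fun s => 0 < s)) Hc).
Qed.

End Picard.

Definition bounded_lipschitz_on_box (n : nat) (M : R) (F : (nat -> R) -> R) : Prop :=
  exists L B, 0 <= L /\ 0 <= B /\ (forall x, in_box n M x -> Rabs (F x) <= B) /\
    lipschitz_on_box n M L F.

Definition lipschitz_from (lo : R) (h : R -> R) : Prop :=
  forall b, exists K, 0 <= K /\
    forall u v, lo <= u <= b -> lo <= v <= b -> Rabs (h u - h v) <= K * Rabs (u - v).

Section BoundedLipschitz.

Variables (n : nat) (M : R).

Lemma bounded_lipschitz_const c : bounded_lipschitz_on_box n M (fun _ => c).
Proof.
  exists 0, (Rabs c). repeat split; [lra | apply Rabs_pos | intros; lra |].
  intros x y d _ _ Hd _. rewrite Rminus_diag, Rabs_R0. lra.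
Qed.

Lemma bounded_lipschitz_coord j : (j < n)%nat -> 0 <= M ->
  bounded_lipschitz_on_box n M (fun x => x j).
Proof.
  intros Hj HM. exists 1, M. repeat split; [lra | exact HM | |].
  - intros x Hx. destruct (Hx j Hj). rewrite Rabs_right; lra.
  - intros x y d _ _ _ Hc. rewrite Rmult_1_l. apply Hc, Hj.
Qed.

Lemma bounded_lipschitz_add F1 F2 :
  bounded_lipschitz_on_box n M F1 -> bounded_lipschitz_on_box n M F2 ->
  bounded_lipschitz_on_box n M (fun x => F1 x + F2 x).
Proof.
  intros [L1 [B1 (HL1 & HB1 & Hb1 & Hl1)]] [L2 [B2 (HL2 & HB2 & Hb2 & Hl2)]].
  exists (L1 + L2), (B1 + B2). repeat split; [lra | lra | |].
  - intros x Hx. eapply Rle_trans; [apply Rabs_triang |].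
    specialize (Hb1 x Hx). specialize (Hb2 x Hx). lra.
  - intros x y d Hx Hy Hd Hc.
    replace (F1 x + F2 x - (F1 y + F2 y)) with ((F1 x - F1 y) + (F2 x - F2 y)) by ring.
    eapply Rle_trans; [apply Rabs_triang |].
    specialize (Hl1 x y d Hx Hy Hd Hc). specialize (Hl2 x y d Hx Hy Hd Hc). lra.
Qed.

Lemma bounded_lipschitz_mul F1 F2 :
  bounded_lipschitz_on_box n M F1 -> bounded_lipschitz_on_box n M F2 ->
  bounded_lipschitz_on_box n M (fun x => F1 x * F2 x).
Proof.
  intros [L1 [B1 (HL1 & HB1 & Hb1 & Hl1)]] [L2 [B2 (HL2 & HB2 & Hb2 & Hl2)]].
  exists (B1 * L2 + B2 * L1), (B1 * B2). repeat split; [nra | nra | |].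
  - intros x Hx. rewrite Rabs_mult.
    apply Rmult_le_compat; [apply Rabs_pos | apply Rabs_pos | apply Hb1, Hx | apply Hb2, Hx].
  - intros x y d Hx Hy Hd Hc.
    replace (F1 x * F2 x - F1 y * F2 y) with (F1 x * (F2 x - F2 y) + F2 y * (F1 x - F1 y)) by ring.
    eapply Rle_trans; [apply Rabs_triang |]. rewrite !Rabs_mult.
    assert (Rabs (F1 x) * Rabs (F2 x - F2 y) <= B1 * (L2 * d))
      by (apply Rmult_le_compat; [apply Rabs_pos | apply Rabs_pos | apply Hb1 | apply Hl2]; auto).
    assert (Rabs (F2 y) * Rabs (F1 x - F1 y) <= B2 * (L1 * d))
      by (apply Rmult_le_compat; [apply Rabs_pos | apply Rabs_pos | apply Hb2 | apply Hl1]; auto).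
    nra.
Qed.

Lemma bounded_lipschitz_comp F h lo :
  bounded_lipschitz_on_box n M F -> (forall x, in_box n M x -> lo <= F x) -> lipschitz_from lo h ->
  bounded_lipschitz_on_box n M (fun x => h (F x)).
Proof.
  intros [L [B (HL & HB & Hb & Hl)]] Hlo Hh.
  destruct (Hh B) as [K [HK HKl]].
  exists (K * L), (K * Rabs (B - lo) + Rabs (h lo)). repeat split.
  - nra.
  - assert (0 <= Rabs (B - lo)) by apply Rabs_pos. assert (0 <= Rabs (h lo)) by apply Rabs_pos. nra.
  - intros x Hx. specialize (Hb x Hx). specialize (Hlo x Hx). apply Rabs_le_between in Hb.
    replace (h (F x)) with ((h (F x) - h lo) + h lo) by ring.
    eapply Rle_trans; [apply Rabs_triang | apply Rplus_le_compat_r].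
    eapply Rle_trans; [apply HKl; lra |].
    apply Rmult_le_compat_l; [exact HK |]. rewrite !Rabs_right; lra.
  - intros x y d Hx Hy Hd Hc.
    assert (Bx := Hb x Hx). assert (By := Hb y Hy). apply Rabs_le_between in Bx, By.
    assert (Lx := Hlo x Hx). assert (Ly := Hlo y Hy).
    eapply Rle_trans; [apply HKl; lra |].
    rewrite Rmult_assoc. apply Rmult_le_compat_l; [exact HK | apply Hl; assumption].
Qed.

End BoundedLipschitz.

Lemma lipschitz_from_of_derive lo (h dh : R -> R) (K : R -> R) :
  (forall z, lo <= z -> is_derive h z (dh z)) ->
  (forall b z, lo <= z <= b -> Rabs (dh z) <= K b) -> (forall b, 0 <= K b) ->
  lipschitz_from lo h.
Proof.
  intros Hd HdK HK b. exists (K b). split; [apply HK |].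
  apply (lipschitz_of_derive_bound h dh lo b).
  - intros z Hz. apply Hd. lra.
  - intros z Hz. apply HdK, Hz.
Qed.

Lemma lipschitz_from_exp lo : lipschitz_from lo exp.
Proof.
  apply (lipschitz_from_of_derive lo exp exp exp);
    [intros z _; apply is_derive_exp | | intros b; apply Rlt_le, exp_pos].
  intros b z Hz. rewrite Rabs_right by (apply Rle_ge, Rlt_le, exp_pos). apply exp_le, Hz.
Qed.

Lemma lipschitz_from_sqrt lo : 0 < lo -> lipschitz_from lo sqrt.
Proof.
  intros Hlo. assert (Hs : 0 < sqrt lo) by (apply sqrt_lt_R0, Hlo).
  apply (lipschitz_from_of_derive lo sqrt (fun z => / (2 * sqrt z)) (fun _ => / (2 * sqrt lo)));
    [| | intros; apply Rlt_le, Rinv_0_lt_compat; lra].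
  - intros z Hz. auto_derive; [lra |]. field. apply Rgt_not_eq, sqrt_lt_R0. lra.
  - intros b z Hz. assert (sqrt lo <= sqrt z) by (apply sqrt_le_1_alt; lra).
    rewrite Rabs_right by (apply Rle_ge, Rlt_le, Rinv_0_lt_compat; lra).
    apply Rinv_le_contravar; lra.
Qed.

Lemma lipschitz_from_ln lo : 0 < lo -> lipschitz_from lo ln.
Proof.
  intros Hlo.
  apply (lipschitz_from_of_derive lo ln Rinv (fun _ => / lo));
    [| | intros; apply Rlt_le, Rinv_0_lt_compat; lra].
  - intros z Hz. auto_derive; [lra | field; lra].
  - intros b z Hz. rewrite Rabs_right by (apply Rle_ge, Rlt_le, Rinv_0_lt_compat; lra).
    apply Rinv_le_contravar; lra.
Qed.

Lemma lipschitz_from_inv lo : 0 < lo -> lipschitz_from lo Rinv.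
Proof.
  intros Hlo.
  apply (lipschitz_from_of_derive lo Rinv (fun z => - / (z * z)) (fun _ => / (lo * lo)));
    [| | intros; apply Rlt_le, Rinv_0_lt_compat; nra].
  - intros z Hz. auto_derive; [lra | field; lra].
  - intros b z Hz. rewrite Rabs_Ropp, Rabs_right by (apply Rle_ge, Rlt_le, Rinv_0_lt_compat; nra).
    apply Rinv_le_contravar; nra.
Qed.

Lemma bounded_lipschitz_arccosh n M F d : 0 < d -> bounded_lipschitz_on_box n M F ->
  (forall x, in_box n M x -> 1 + d <= F x) -> bounded_lipschitz_on_box n M (fun x => arccosh (F x)).
Proof.
  intros Hd HF HFd. unfold arccosh.
  apply (bounded_lipschitz_comp n M (fun x => F x + sqrt (F x * F x - 1)) ln 1);
    [| | apply lipschitz_from_ln; lra].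
  - apply bounded_lipschitz_add; [exact HF |].
    apply (bounded_lipschitz_comp n M (fun x => F x * F x - 1) sqrt (2 * d));
      [| | apply lipschitz_from_sqrt; lra].
    + apply bounded_lipschitz_add;
        [apply bounded_lipschitz_mul; exact HF | apply bounded_lipschitz_const].
    + intros x Hx. specialize (HFd x Hx). nra.
  - intros x Hx. specialize (HFd x Hx). assert (0 <= sqrt (F x * F x - 1)) by apply sqrt_pos. lra.
Qed.

(** * Right-angled hexagons *)

Lemma sqrt_sqr_sub1_spec x : 1 <= x ->
  0 <= sqrt (x * x - 1) /\ sqrt (x * x - 1) * sqrt (x * x - 1) = x * x - 1 /\
  sqrt (x * x - 1) <= x.
Proof.
  intros Hx. assert (H0 : 0 <= x * x - 1) by nra.
  assert (H1 := sqrt_pos (x * x - 1)). assert (H2 := sqrt_sqrt _ H0).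
  repeat split; [exact H1 | exact H2 | nra].
Qed.

Lemma ln_le_sub1 y : 0 < y -> ln y <= y - 1.
Proof.
  intros Hy. rewrite <- (ln_exp (y - 1)). apply ln_le; [exact Hy |].
  assert (H := exp_ineq1_le (y - 1)). lra.
Qed.

Lemma exp_arccosh y : 1 <= y -> exp (arccosh y) = y + sqrt (y * y - 1).
Proof.
  intros Hy. apply exp_ln. destruct (sqrt_sqr_sub1_spec y Hy) as [H _]. lra.
Qed.

Lemma arccosh_le y z : 1 <= y -> y <= z -> arccosh y <= arccosh z.
Proof.
  intros Hy Hz. destruct (sqrt_sqr_sub1_spec y Hy) as [H _].
  apply ln_le; [lra |]. apply Rplus_le_compat; [exact Hz | apply sqrt_le_1_alt; nra].
Qed.

Lemma arccosh_nonneg y : 1 <= y -> 0 <= arccosh y.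
Proof.
  intros Hy. unfold arccosh. destruct (sqrt_sqr_sub1_spec y Hy) as [H _].
  rewrite <- ln_1. apply ln_le; lra.
Qed.

Lemma arccosh_pos y : 1 < y -> 0 < arccosh y.
Proof.
  intros Hy. unfold arccosh. destruct (sqrt_sqr_sub1_spec y ltac:(lra)) as [H _].
  rewrite <- ln_1. apply ln_increasing; lra.
Qed.

Lemma arccosh_le_ln_double y : 1 <= y -> arccosh y <= ln (2 * y).
Proof.
  intros Hy. destruct (sqrt_sqr_sub1_spec y Hy) as [H1 [_ H3]]. apply ln_le; lra.
Qed.

Lemma arccosh_near_1 eta : 0 < eta ->
  exists d, 0 < d /\ forall y, 1 <= y <= 1 + d -> arccosh y < eta.
Proof.
  intros He. set (d := Rmin 1 (eta * eta / 16)).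
  assert (Hd1 := Rmin_l 1 (eta * eta / 16)). assert (Hd2 := Rmin_r 1 (eta * eta / 16)).
  assert (Hd : 0 < d) by (apply Rmin_pos; nra).
  exists d. split; [exact Hd |]. intros y Hy.
  destruct (sqrt_sqr_sub1_spec y ltac:(lra)) as [H _].
  assert (Hln := ln_le_sub1 (y + sqrt (y * y - 1)) ltac:(lra)). unfold arccosh.
  assert (Hs : sqrt (y * y - 1) <= eta / 2).
  { rewrite <- (sqrt_square (eta / 2)) by lra. apply sqrt_le_1_alt. fold d in Hd1, Hd2. nra. }
  fold d in Hd1, Hd2. assert (d < eta / 2) by nra. lra.
Qed.

Lemma cosh_sinh_double_arccosh X : 1 <= X ->
  cosh (2 * arccosh X) = 2 * X * X - 1 /\ sinh (2 * arccosh X) = 2 * X * sqrt (X * X - 1).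
Proof.
  intros HX. destruct (sqrt_sqr_sub1_spec X HX) as [H1 [H2 H3]].
  unfold cosh, sinh. replace (2 * arccosh X) with (arccosh X + arccosh X) by ring.
  rewrite Ropp_plus_distr, !exp_plus, !exp_Ropp, exp_arccosh by exact HX.
  set (s := sqrt (X * X - 1)) in *.
  assert (Hinv : / (X + s) = X - s) by (field_simplify_eq; [nra | lra]).
  rewrite Hinv. split; nra.
Qed.

(* With [x = cosh (l / 2)], [cosh_dbl x = cosh l] and [sinh_dbl x = sinh l]; [hexagon_cosh] is
   the cosine rule for right-angled hexagons written in these half-length coordinates. *)
Definition cosh_dbl (x : R) : R := 2 * x * x - 1.
Definition sinh_dbl (x : R) : R := 2 * x * sqrt (x * x - 1).
Definition hexagon_cosh (xa xb xc : R) : R :=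
  (cosh_dbl xa + cosh_dbl xb * cosh_dbl xc) / (sinh_dbl xb * sinh_dbl xc).

Lemma sinh_dbl_pos x : 1 < x -> 0 < sinh_dbl x.
Proof.
  intros Hx. unfold sinh_dbl. assert (0 < sqrt (x * x - 1)) by (apply sqrt_lt_R0; nra). nra.
Qed.

Lemma sinh_dbl_le x : 1 <= x -> sinh_dbl x <= 2 * (x * x).
Proof. intros Hx. unfold sinh_dbl. destruct (sqrt_sqr_sub1_spec x Hx) as [H1 [H2 H3]]. nra. Qed.

Lemma sinh_dbl_ge x c : 1 <= c -> c <= x -> 2 * sqrt (c * c - 1) <= sinh_dbl x.
Proof.
  intros Hc Hx. unfold sinh_dbl.
  assert (sqrt (c * c - 1) <= sqrt (x * x - 1)) by (apply sqrt_le_1_alt; nra).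
  assert (0 <= sqrt (c * c - 1)) by apply sqrt_pos. nra.
Qed.

Lemma sinh_dbl_mul_add1_le x y : 1 <= x -> 1 <= y ->
  sinh_dbl x * sinh_dbl y + 1 <= cosh_dbl x * cosh_dbl y.
Proof.
  intros Hx Hy.
  destruct (sqrt_sqr_sub1_spec x Hx) as [Hx1 [Hx2 _]].
  destruct (sqrt_sqr_sub1_spec y Hy) as [Hy1 [Hy2 _]].
  assert (Ex : cosh_dbl x * cosh_dbl x = sinh_dbl x * sinh_dbl x + 1)
    by (unfold cosh_dbl, sinh_dbl; nra).
  assert (Ey : cosh_dbl y * cosh_dbl y = sinh_dbl y * sinh_dbl y + 1)
    by (unfold cosh_dbl, sinh_dbl; nra).
  assert (Hsx : 0 <= sinh_dbl x) by (unfold sinh_dbl; nra).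
  assert (Hsy : 0 <= sinh_dbl y) by (unfold sinh_dbl; nra).
  assert (1 <= cosh_dbl x) by (unfold cosh_dbl; nra).
  assert (1 <= cosh_dbl y) by (unfold cosh_dbl; nra).
  apply Rsqr_incr_0_var; [unfold Rsqr | nra].
  replace (cosh_dbl x * cosh_dbl y * (cosh_dbl x * cosh_dbl y))
    with ((cosh_dbl x * cosh_dbl x) * (cosh_dbl y * cosh_dbl y)) by ring.
  rewrite Ex, Ey. pose proof (Rle_0_sqr (sinh_dbl x - sinh_dbl y)). unfold Rsqr in *. nra.
Qed.

Lemma hexagon_cosh_sub1_ge xa xb xc : 1 <= xa -> 1 < xb -> 1 < xc ->
  xa * xa / (4 * (xb * xb) * (xc * xc)) <= hexagon_cosh xa xb xc - 1.
Proof.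
  intros Ha Hb Hc.
  assert (Hsb := sinh_dbl_pos xb Hb). assert (Hsc := sinh_dbl_pos xc Hc).
  assert (Hlb := sinh_dbl_le xb ltac:(lra)). assert (Hlc := sinh_dbl_le xc ltac:(lra)).
  assert (Hcc := sinh_dbl_mul_add1_le xb xc ltac:(lra) ltac:(lra)).
  assert (Hca : xa * xa <= cosh_dbl xa) by (unfold cosh_dbl; nra).
  unfold hexagon_cosh.
  replace ((cosh_dbl xa + cosh_dbl xb * cosh_dbl xc) / (sinh_dbl xb * sinh_dbl xc) - 1)
    with ((cosh_dbl xa + (cosh_dbl xb * cosh_dbl xc - sinh_dbl xb * sinh_dbl xc))
          / (sinh_dbl xb * sinh_dbl xc)) by (field; lra).
  unfold Rdiv. apply Rle_trans with (cosh_dbl xa * / (sinh_dbl xb * sinh_dbl xc)).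
  - apply Rmult_le_compat; [nra | apply Rlt_le, Rinv_0_lt_compat; nra | exact Hca |].
    apply Rinv_le_contravar; nra.
  - apply Rmult_le_compat_r; [apply Rlt_le, Rinv_0_lt_compat; nra | lra].
Qed.

Lemma one_le_hexagon_cosh xa xb xc : 1 <= xa -> 1 < xb -> 1 < xc -> 1 <= hexagon_cosh xa xb xc.
Proof.
  intros Ha Hb Hc. assert (H := hexagon_cosh_sub1_ge xa xb xc Ha Hb Hc).
  assert (0 <= xa * xa / (4 * (xb * xb) * (xc * xc))); [| lra].
  apply Rmult_le_pos; [nra |].
  apply Rlt_le, Rinv_0_lt_compat, Rmult_lt_0_compat; [apply Rmult_lt_0_compat |]; nra.
Qed.

Lemma hexagon_cosh_le xa xb xc sb sc : 1 <= xa -> 1 < xb -> 1 < xc ->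
  0 < sb -> sb <= sinh_dbl xb -> 0 < sc -> sc <= sinh_dbl xc ->
  hexagon_cosh xa xb xc <= 4 * (xa * xa + (xb * xb) * (xc * xc)) / (sb * sc).
Proof.
  intros Ha Hb Hc Hsb Hb' Hsc Hc'. unfold hexagon_cosh, Rdiv.
  assert (1 <= cosh_dbl xa <= 2 * (xa * xa)) by (unfold cosh_dbl; nra).
  assert (1 <= cosh_dbl xb <= 2 * (xb * xb)) by (unfold cosh_dbl; nra).
  assert (1 <= cosh_dbl xc <= 2 * (xc * xc)) by (unfold cosh_dbl; nra).
  assert (cosh_dbl xb * cosh_dbl xc <= 2 * (xb * xb) * (2 * (xc * xc)))
    by (apply Rmult_le_compat; lra).
  apply Rmult_le_compat; [nra | apply Rlt_le, Rinv_0_lt_compat; nra | nra |].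
  apply Rinv_le_contravar; [nra | apply Rmult_le_compat; lra].
Qed.

Lemma cosh_div_sinh_dbl_le x : 1 < x -> cosh_dbl x / sinh_dbl x <= (x * x) / (x * x - 1).
Proof.
  intros Hx. destruct (sqrt_sqr_sub1_spec x ltac:(lra)) as [H1 [H2 H3]].
  assert (Hs : 0 < sqrt (x * x - 1)) by (apply sqrt_lt_R0; nra).
  unfold cosh_dbl, sinh_dbl. set (s := sqrt (x * x - 1)) in *.
  assert (Hx1 : 0 < x * x - 1) by nra. assert (Hxs : 0 < 2 * x * s) by nra.
  apply Rmult_le_reg_r with (2 * x * s * (x * x - 1)); [apply Rmult_lt_0_compat; auto |].
  replace ((2 * x * x - 1) / (2 * x * s) * (2 * x * s * (x * x - 1)))
    with ((2 * x * x - 1) * (x * x - 1)) by (field; lra).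
  replace (x * x / (x * x - 1) * (2 * x * s * (x * x - 1))) with (x * x * 2 * x * s)
    by (field; lra).
  replace ((2 * x * x - 1) * (x * x - 1)) with ((2 * x * x - 1) * s * s)
    by (rewrite Rmult_assoc, H2; ring).
  nra.
Qed.

Lemma hexagon_cosh_sub1_le xa xb xc m : 1 <= xa -> 2 <= xb -> 2 <= xc -> 4 <= m ->
  m <= xb * xb -> m <= xc * xc ->
  hexagon_cosh xa xb xc - 1 <= 2 * (xa * xa) / ((xb * xb) * (xc * xc)) + 3 / (m - 1).
Proof.
  intros Ha Hb Hc Hm Hmb Hmc.
  assert (Hsb := sinh_dbl_pos xb ltac:(lra)). assert (Hsc := sinh_dbl_pos xc ltac:(lra)).
  assert (Hrb := cosh_div_sinh_dbl_le xb ltac:(lra)).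
  assert (Hrc := cosh_div_sinh_dbl_le xc ltac:(lra)).
  assert (Hcb : 0 <= cosh_dbl xb) by (unfold cosh_dbl; nra).
  assert (Hcc : 0 <= cosh_dbl xc) by (unfold cosh_dbl; nra).
  unfold hexagon_cosh.
  replace ((cosh_dbl xa + cosh_dbl xb * cosh_dbl xc) / (sinh_dbl xb * sinh_dbl xc) - 1)
    with (cosh_dbl xa / (sinh_dbl xb * sinh_dbl xc)
          + ((cosh_dbl xb / sinh_dbl xb) * (cosh_dbl xc / sinh_dbl xc) - 1)) by (field; lra).
  apply Rplus_le_compat.
  - destruct (sqrt_sqr_sub1_spec xb ltac:(lra)) as [B1 [B2 B3]].
    destruct (sqrt_sqr_sub1_spec xc ltac:(lra)) as [C1 [C2 C3]].
    assert (xb <= 2 * sqrt (xb * xb - 1)) by nra.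
    assert (xc <= 2 * sqrt (xc * xc - 1)) by nra.
    assert (xb * xb <= sinh_dbl xb) by (unfold sinh_dbl; nra).
    assert (xc * xc <= sinh_dbl xc) by (unfold sinh_dbl; nra).
    unfold Rdiv. apply Rmult_le_compat; [unfold cosh_dbl; nra | apply Rlt_le, Rinv_0_lt_compat; nra
                                        | unfold cosh_dbl; nra | apply Rinv_le_contravar; nra].
  - assert (0 <= cosh_dbl xb / sinh_dbl xb)
      by (apply Rmult_le_pos; [lra | apply Rlt_le, Rinv_0_lt_compat; lra]).
    assert (0 <= cosh_dbl xc / sinh_dbl xc)
      by (apply Rmult_le_pos; [lra | apply Rlt_le, Rinv_0_lt_compat; lra]).
    apply Rle_trans with ((xb * xb) / (xb * xb - 1) * ((xc * xc) / (xc * xc - 1)) - 1).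
    { apply Rplus_le_compat_r, Rmult_le_compat; assumption. }
    set (u := xb * xb) in *. set (v := xc * xc) in *.
    replace (u / (u - 1) * (v / (v - 1)) - 1)
      with (1 / (u - 1) + 1 / (v - 1) + 1 / ((u - 1) * (v - 1))) by (field; lra).
    assert (1 / (u - 1) <= 1 / (m - 1))
      by (apply Rmult_le_compat_l; [lra | apply Rinv_le_contravar; lra]).
    assert (1 / (v - 1) <= 1 / (m - 1))
      by (apply Rmult_le_compat_l; [lra | apply Rinv_le_contravar; lra]).
    assert (1 / ((u - 1) * (v - 1)) <= 1 / (m - 1))
      by (apply Rmult_le_compat_l; [lra | apply Rinv_le_contravar; nra]).
    replace (3 / (m - 1)) with (1 / (m - 1) + 1 / (m - 1) + 1 / (m - 1)) by (field; lra). lra.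
Qed.

(* The boundary arc at [p] of the hexagon with vertices [p], [q], [r] (on boundary components),
   where [ca], [cb], [cc] are [cosh (l0 / 2)] of the red sides opposite [p], [q], [r]. *)
Definition boundary_arc (p q r : nat) (ca cb cc : R) (x : nat -> R) : R :=
  arccosh (hexagon_cosh (exp (x q + x r) * ca) (exp (x r + x p) * cb) (exp (x p + x q) * cc)).

Lemma exp_sum_mul_bounds n M a b c x : (a < n)%nat -> (b < n)%nat -> 1 < c -> in_box n M x ->
  c <= exp (x a + x b) * c <= exp (2 * M) * c.
Proof.
  intros Ha Hb Hc Hx. destruct (Hx a Ha), (Hx b Hb).
  assert (1 <= exp (x a + x b)) by (apply one_le_exp; lra).
  assert (exp (x a + x b) <= exp (2 * M)) by (apply exp_le; lra).
  split; nra.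
Qed.

Lemma exp_sum_mul_ratio (x : nat -> R) p q r ca cb cc : 0 < ca ->
  (exp (x r + x p) * cb) * (exp (x p + x q) * cc) =
  (exp (x q + x r) * ca) * (cb * cc / ca) * (exp (x p) * exp (x p)).
Proof. intros Ha. rewrite !exp_plus. field. lra. Qed.

Section BoundaryArc.

Variables (n p q r : nat) (ca cb cc : R).
Hypotheses (p_lt : (p < n)%nat) (q_lt : (q < n)%nat) (r_lt : (r < n)%nat).
Hypotheses (ca_gt1 : 1 < ca) (cb_gt1 : 1 < cb) (cc_gt1 : 1 < cc).

Lemma bounded_lipschitz_exp_sum_mul M a b c : (a < n)%nat -> (b < n)%nat -> 0 <= M ->
  bounded_lipschitz_on_box n M (fun x => exp (x a + x b) * c).
Proof.
  intros Ha Hb HM. apply bounded_lipschitz_mul; [| apply bounded_lipschitz_const].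
  apply (bounded_lipschitz_comp n M (fun x => x a + x b) exp 0);
    [apply bounded_lipschitz_add; apply bounded_lipschitz_coord; assumption | |
     apply lipschitz_from_exp].
  intros x Hx. destruct (Hx a Ha), (Hx b Hb). lra.
Qed.

Lemma bounded_lipschitz_sinh_dbl M F c : 1 < c -> bounded_lipschitz_on_box n M F ->
  (forall x, in_box n M x -> c <= F x) -> bounded_lipschitz_on_box n M (fun x => sinh_dbl (F x)).
Proof.
  intros Hc HF Hlo. unfold sinh_dbl.
  apply bounded_lipschitz_mul;
    [apply bounded_lipschitz_mul; [apply bounded_lipschitz_const | exact HF] |].
  apply (bounded_lipschitz_comp n M (fun x => F x * F x - 1) sqrt (c * c - 1));
    [| | apply lipschitz_from_sqrt; nra].
  - apply bounded_lipschitz_add;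
      [apply bounded_lipschitz_mul; exact HF | apply bounded_lipschitz_const].
  - intros x Hx. specialize (Hlo x Hx). nra.
Qed.

Lemma bounded_lipschitz_cosh_dbl M F : bounded_lipschitz_on_box n M F ->
  bounded_lipschitz_on_box n M (fun x => cosh_dbl (F x)).
Proof.
  intros HF. unfold cosh_dbl.
  apply bounded_lipschitz_add; [| apply bounded_lipschitz_const].
  apply bounded_lipschitz_mul; [apply bounded_lipschitz_mul; [apply bounded_lipschitz_const |] |];
    exact HF.
Qed.

(* Keeps [arccosh] away from [1], where it fails to be Lipschitz. *)
Lemma hexagon_cosh_gap_on_box M x : in_box n M x ->
  1 + / (4 * (exp (2 * M) * cb) ^ 2 * (exp (2 * M) * cc) ^ 2) <=
  hexagon_cosh (exp (x q + x r) * ca) (exp (x r + x p) * cb) (exp (x p + x q) * cc).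
Proof.
  intros Hx.
  destruct (exp_sum_mul_bounds n M q r ca x) as [A1 A2]; auto.
  destruct (exp_sum_mul_bounds n M r p cb x) as [B1 B2]; auto.
  destruct (exp_sum_mul_bounds n M p q cc x) as [C1 C2]; auto.
  set (Xa := exp (x q + x r) * ca) in *. set (Xb := exp (x r + x p) * cb) in *.
  set (Xc := exp (x p + x q) * cc) in *. set (U := exp (2 * M)) in *.
  assert (H := hexagon_cosh_sub1_ge Xa Xb Xc ltac:(lra) ltac:(lra) ltac:(lra)).
  apply Rle_trans with (1 + Xa * Xa / (4 * (Xb * Xb) * (Xc * Xc))); [| lra].
  apply Rplus_le_compat_l. unfold Rdiv. rewrite <- (Rmult_1_l (/ (4 * _ ^ 2 * _ ^ 2))).
  apply Rmult_le_compat; [lra | | nra |].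
  - apply Rlt_le, Rinv_0_lt_compat. apply Rmult_lt_0_compat; [apply Rmult_lt_0_compat |];
      [lra | apply pow_lt; lra | apply pow_lt; lra].
  - apply Rinv_le_contravar; [apply Rmult_lt_0_compat; [apply Rmult_lt_0_compat |]; nra |].
    simpl. rewrite !Rmult_1_r.
    apply Rmult_le_compat; [nra | nra | apply Rmult_le_compat_l; [lra |] | ];
      apply Rmult_le_compat; lra.
Qed.

Lemma bounded_lipschitz_hexagon_cosh M : 0 <= M ->
  bounded_lipschitz_on_box n M
    (fun x => hexagon_cosh (exp (x q + x r) * ca) (exp (x r + x p) * cb) (exp (x p + x q) * cc)).
Proof.
  intros HM.
  set (Xa := fun x : nat -> R => exp (x q + x r) * ca).
  set (Xb := fun x : nat -> R => exp (x r + x p) * cb).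
  set (Xc := fun x : nat -> R => exp (x p + x q) * cc).
  assert (Hb : forall x, in_box n M x -> cb <= Xb x)
    by (intros x Hx; apply (exp_sum_mul_bounds n M); auto).
  assert (Hc : forall x, in_box n M x -> cc <= Xc x)
    by (intros x Hx; apply (exp_sum_mul_bounds n M); auto).
  change (bounded_lipschitz_on_box n M (fun x => hexagon_cosh (Xa x) (Xb x) (Xc x))).
  unfold hexagon_cosh, Rdiv. apply bounded_lipschitz_mul.
  - apply bounded_lipschitz_add; [| apply bounded_lipschitz_mul];
      apply bounded_lipschitz_cosh_dbl, bounded_lipschitz_exp_sum_mul; assumption.
  - set (s := 2 * sqrt (cb * cb - 1) * (2 * sqrt (cc * cc - 1))).
    assert (0 < sqrt (cb * cb - 1)) by (apply sqrt_lt_R0; nra).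
    assert (0 < sqrt (cc * cc - 1)) by (apply sqrt_lt_R0; nra).
    apply (bounded_lipschitz_comp n M (fun x => sinh_dbl (Xb x) * sinh_dbl (Xc x)) Rinv s);
      [| | apply lipschitz_from_inv; unfold s; nra].
    + apply bounded_lipschitz_mul;
        [apply (bounded_lipschitz_sinh_dbl M Xb cb) | apply (bounded_lipschitz_sinh_dbl M Xc cc)];
        try assumption; apply bounded_lipschitz_exp_sum_mul; assumption.
    + intros x Hx. unfold s.
      assert (S1 := sinh_dbl_ge (Xb x) cb ltac:(lra) (Hb x Hx)).
      assert (S2 := sinh_dbl_ge (Xc x) cc ltac:(lra) (Hc x Hx)).
      apply Rmult_le_compat; lra.
Qed.

Lemma bounded_lipschitz_boundary_arc M : 0 <= M ->
  bounded_lipschitz_on_box n M (boundary_arc p q r ca cb cc).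
Proof.
  intros HM.
  apply (bounded_lipschitz_arccosh n M _ (/ (4 * (exp (2 * M) * cb) ^ 2 * (exp (2 * M) * cc) ^ 2))).
  - assert (0 < exp (2 * M)) by apply exp_pos.
    apply Rinv_0_lt_compat, Rmult_lt_0_compat; [apply Rmult_lt_0_compat |]; try lra; apply pow_lt; nra.
  - apply bounded_lipschitz_hexagon_cosh, HM.
  - intros x Hx. apply hexagon_cosh_gap_on_box, Hx.
Qed.

Lemma boundary_arc_linear_growth : exists a, 0 <= a /\
  forall M x, 0 <= M -> in_box n M x -> 0 <= boundary_arc p q r ca cb cc x <= a + 8 * M.
Proof.
  set (sb := 2 * sqrt (cb * cb - 1)). set (sc := 2 * sqrt (cc * cc - 1)).
  assert (Hsb : 0 < sb) by (unfold sb; assert (0 < sqrt (cb * cb - 1)) by (apply sqrt_lt_R0; nra); lra).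
  assert (Hsc : 0 < sc) by (unfold sc; assert (0 < sqrt (cc * cc - 1)) by (apply sqrt_lt_R0; nra); lra).
  set (K := 8 * (ca * ca + (cb * cb) * (cc * cc)) / (sb * sc)).
  assert (HK : 0 < K) by (unfold K; apply Rdiv_lt_0_compat; [nra | apply Rmult_lt_0_compat; nra]).
  exists (Rabs (ln K)). split; [apply Rabs_pos |]. intros M x HM Hx.
  destruct (exp_sum_mul_bounds n M q r ca x) as [A1 A2]; auto.
  destruct (exp_sum_mul_bounds n M r p cb x) as [B1 B2]; auto.
  destruct (exp_sum_mul_bounds n M p q cc x) as [C1 C2]; auto.
  unfold boundary_arc. set (Xa := exp (x q + x r) * ca) in *. set (Xb := exp (x r + x p) * cb) in *.
  set (Xc := exp (x p + x q) * cc) in *. set (U := exp (2 * M)) in *.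
  assert (HU : 1 <= U) by (apply one_le_exp; lra).
  assert (HQ1 := one_le_hexagon_cosh Xa Xb Xc ltac:(lra) ltac:(lra) ltac:(lra)).
  split; [apply arccosh_nonneg, HQ1 |].
  eapply Rle_trans; [apply arccosh_le_ln_double, HQ1 |].
  assert (HQu := hexagon_cosh_le Xa Xb Xc sb sc ltac:(lra) ltac:(lra) ltac:(lra)
                   Hsb (sinh_dbl_ge Xb cb ltac:(lra) B1) Hsc (sinh_dbl_ge Xc cc ltac:(lra) C1)).
  assert (HU4 : U * U * (U * U) = exp (8 * M)) by (unfold U; rewrite <- !exp_plus; f_equal; ring).
  assert (H2Q : 2 * hexagon_cosh Xa Xb Xc <= exp (8 * M) * K).
  { rewrite <- HU4. unfold K. unfold Rdiv in *.
    assert (0 < / (sb * sc)) by (apply Rinv_0_lt_compat; nra).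
    assert (HUU : 1 <= U * U) by nra.
    assert (Xa * Xa <= (U * U) * (ca * ca))
      by (replace (U * U * (ca * ca)) with ((U * ca) * (U * ca)) by ring;
                                                apply Rmult_le_compat; lra).
    assert (U * U * (ca * ca) <= U * U * (U * U) * (ca * ca)) by (apply Rmult_le_compat_r; nra).
    assert (Xb * Xb <= (U * cb) * (U * cb)) by (apply Rmult_le_compat; lra).
    assert (Xc * Xc <= (U * cc) * (U * cc)) by (apply Rmult_le_compat; lra).
    assert ((Xb * Xb) * (Xc * Xc) <= ((U * cb) * (U * cb)) * ((U * cc) * (U * cc)))
      by (apply Rmult_le_compat; nra).
    nra. }
  apply Rle_trans with (ln (exp (8 * M) * K)); [apply ln_le; nra |].
  rewrite ln_mult, ln_exp by (apply exp_pos || lra).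
  assert (H := Rle_abs (ln K)). lra.
Qed.

Lemma boundary_arc_nonneg x : 0 <= x p -> 0 <= x q -> 0 <= x r ->
  0 <= boundary_arc p q r ca cb cc x.
Proof.
  intros Hp Hq Hr. apply arccosh_nonneg, one_le_hexagon_cosh;
    match goal with |- context [exp (?u + ?v) * ?c] =>
      assert (1 <= exp (u + v)) by (apply one_le_exp; lra); nra end.
Qed.

Lemma boundary_arc_ge x : 0 <= x p -> 0 <= x q -> 0 <= x r ->
  arccosh (1 + ca * ca / (4 * (cb * cb) * (cc * cc)) / exp (x p) ^ 4) <= boundary_arc p q r ca cb cc x.
Proof.
  intros Hp Hq Hr. unfold boundary_arc.
  assert (E1 := one_le_exp (x p) Hp).
  assert (Ra := exp_sum_mul_ratio x p q r ca cb cc ltac:(lra)).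
  set (E := exp (x p)) in *.
  set (Xa := exp (x q + x r) * ca) in *. set (Xb := exp (x r + x p) * cb) in *.
  set (Xc := exp (x p + x q) * cc) in *.
  assert (1 <= exp (x q + x r)) by (apply one_le_exp; lra).
  assert (1 <= exp (x r + x p)) by (apply one_le_exp; lra).
  assert (1 <= exp (x p + x q)) by (apply one_le_exp; lra).
  assert (HXa : 1 < Xa) by (unfold Xa; nra). assert (HXb : 1 < Xb) by (unfold Xb; nra).
  assert (HXc : 1 < Xc) by (unfold Xc; nra).
  apply arccosh_le.
  - assert (0 <= ca * ca / (4 * (cb * cb) * (cc * cc)) / E ^ 4); [| lra].
    unfold Rdiv. apply Rmult_le_pos; [apply Rmult_le_pos; [nra |] |].
    + apply Rlt_le, Rinv_0_lt_compat, Rmult_lt_0_compat; [apply Rmult_lt_0_compat |]; nra.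
    + apply Rlt_le, Rinv_0_lt_compat, pow_lt. lra.
  - assert (Hhex := hexagon_cosh_sub1_ge Xa Xb Xc ltac:(lra) HXb HXc).
    replace (ca * ca / (4 * (cb * cb) * (cc * cc)) / E ^ 4)
      with (Xa * Xa / (4 * (Xb * Xb) * (Xc * Xc))); [lra |].
    replace (4 * (Xb * Xb) * (Xc * Xc)) with (4 * ((Xb * Xc) * (Xb * Xc))) by ring.
    rewrite Ra. simpl. field. repeat split; lra.
Qed.

Lemma boundary_arc_le x : 0 <= x p -> 0 <= x q -> 0 <= x r -> 2 <= exp (x p) ->
  boundary_arc p q r ca cb cc x <=
  arccosh (1 + 2 * (ca * ca) / ((cb * cb) * (cc * cc)) / exp (x p) ^ 4 + 3 / (exp (x p) ^ 2 - 1)).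
Proof.
  intros Hp Hq Hr HE. unfold boundary_arc.
  assert (Ra := exp_sum_mul_ratio x p q r ca cb cc ltac:(lra)).
  assert (Eb : exp (x r + x p) = exp (x r) * exp (x p)) by apply exp_plus.
  assert (Ec : exp (x p + x q) = exp (x p) * exp (x q)) by apply exp_plus.
  assert (Er := one_le_exp (x r) Hr). assert (Eq := one_le_exp (x q) Hq).
  set (E := exp (x p)) in *.
  set (Xa := exp (x q + x r) * ca) in *. set (Xb := exp (x r + x p) * cb) in *.
  set (Xc := exp (x p + x q) * cc) in *.
  assert (1 <= exp (x q + x r)) by (apply one_le_exp; lra).
  assert (HXa : 1 < Xa) by (unfold Xa; nra).
  assert (HXb : E <= Xb).
  { unfold Xb; rewrite Eb. assert (E <= exp (x r) * E) by nra. assert (0 < exp (x r) * E) by nra. nra. }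
  assert (HXc : E <= Xc).
  { unfold Xc; rewrite Ec. assert (E <= E * exp (x q)) by nra. assert (0 < E * exp (x q)) by nra. nra. }
  apply arccosh_le; [apply one_le_hexagon_cosh; lra |].
  assert (Hhex := hexagon_cosh_sub1_le Xa Xb Xc (E * E) ltac:(lra) ltac:(lra) ltac:(lra)
                 ltac:(nra) ltac:(nra) ltac:(nra)).
  replace (2 * (ca * ca) / (cb * cb * (cc * cc)) / E ^ 4)
    with (2 * (Xa * Xa) / (Xb * Xb * (Xc * Xc))).
  - replace (E ^ 2) with (E * E) by ring. lra.
  - replace (Xb * Xb * (Xc * Xc)) with ((Xb * Xc) * (Xb * Xc)) by ring.
    rewrite Ra. simpl. field. repeat split; lra.
Qed.

Lemma boundary_arc_lower_bound W : exists beta, 0 < beta /\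
  forall x, 0 <= x p -> 0 <= x q -> 0 <= x r -> x p <= W -> beta <= boundary_arc p q r ca cb cc x.
Proof.
  set (c0 := ca * ca / (4 * (cb * cb) * (cc * cc))).
  assert (Hc0 : 0 < c0)
    by (unfold c0; apply Rdiv_lt_0_compat;
        [nra | apply Rmult_lt_0_compat; [apply Rmult_lt_0_compat |]; nra]).
  assert (HEW : 0 < exp W ^ 4) by apply pow_lt, exp_pos.
  assert (Hc0W : 0 < c0 / exp W ^ 4) by (apply Rdiv_lt_0_compat; assumption).
  exists (arccosh (1 + c0 / exp W ^ 4)). split; [apply arccosh_pos; lra |].
  intros x Hp Hq Hr HW. eapply Rle_trans; [| apply boundary_arc_ge; assumption].
  apply arccosh_le; [lra |]. apply Rplus_le_compat_l. fold c0. unfold Rdiv.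
  apply Rmult_le_compat_l; [lra |]. apply Rinv_le_contravar; [apply pow_lt, exp_pos |].
  apply pow_incr. split; [apply Rlt_le, exp_pos | apply exp_le, HW].
Qed.

Lemma boundary_arc_small eps : 0 < eps -> exists E0, forall x,
  0 <= x p -> 0 <= x q -> 0 <= x r -> E0 <= exp (x p) -> boundary_arc p q r ca cb cc x < eps.
Proof.
  intros Heps.
  set (K := 2 * (ca * ca) / ((cb * cb) * (cc * cc))).
  assert (HK : 0 < K) by (unfold K; apply Rdiv_lt_0_compat; [nra | apply Rmult_lt_0_compat; nra]).
  destruct (arccosh_near_1 eps Heps) as [dl [Hdl Hac]].
  exists (2 + (K + 3) / dl). intros x Hp Hq Hr HE0.
  assert (0 < (K + 3) / dl) by (apply Rdiv_lt_0_compat; lra).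
  set (E := exp (x p)) in *.
  eapply Rle_lt_trans; [apply boundary_arc_le; fold E; lra |]. fold E.
  apply Hac. fold K.
  assert (HE4 : E <= E ^ 4).
  { simpl. assert (1 <= E * E) by nra. assert (1 <= E * (E * E)) by nra. nra. }
  assert (HE2 : E <= E ^ 2 - 1) by (simpl; nra).
  assert (K / E ^ 4 <= K / E) by (apply Rmult_le_compat_l; [lra | apply Rinv_le_contravar; lra]).
  assert (3 / (E ^ 2 - 1) <= 3 / E) by (apply Rmult_le_compat_l; [lra | apply Rinv_le_contravar; lra]).
  assert ((K + 3) / E < dl).
  { apply (Rmult_lt_reg_r E); [lra |]. unfold Rdiv. rewrite Rmult_assoc, Rinv_l, Rmult_1_r by lra.
    apply (Rmult_lt_reg_l (/ dl)); [apply Rinv_0_lt_compat; lra |].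
    replace (/ dl * (dl * E)) with E by (field; lra).
    replace (/ dl * (K + 3)) with ((K + 3) / dl) by (unfold Rdiv; ring). lra. }
  assert (0 <= K / E ^ 4) by (apply Rmult_le_pos; [lra | apply Rlt_le, Rinv_0_lt_compat, pow_lt; lra]).
  assert (0 <= 3 / (E ^ 2 - 1)) by (apply Rmult_le_pos; [lra | apply Rlt_le, Rinv_0_lt_compat; lra]).
  assert (K / E + 3 / E = (K + 3) / E) by (field; lra).
  split; lra.
Qed.

End BoundaryArc.

(** * The flow on an ideal triangulation *)

Lemma diverges_of_derive_lower_bound (f g : R -> R) :
  (forall t, 0 < t -> is_derive f t (g t)) ->
  (forall s t, 0 <= s <= t -> f s <= f t) ->
  (forall W, exists beta, 0 < beta /\ forall t, 0 < t -> f t <= W -> beta <= g t) ->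
  forall W, exists T0, forall t, T0 < t -> W < f t.
Proof.
  intros Hd Hmono Hspeed W. destruct (Hspeed W) as [beta [Hbeta Hg]].
  set (t1 := 1 + (Rmax 0 (W - f 1) + 1) / beta).
  assert (Hm := Rmax_l 0 (W - f 1)). assert (Hm' := Rmax_r 0 (W - f 1)).
  assert (Ht1 : 1 < t1) by (unfold t1; assert (0 < (Rmax 0 (W - f 1) + 1) / beta)
                              by (apply Rdiv_lt_0_compat; lra); lra).
  exists t1. intros t Ht. apply Rlt_le_trans with (f t1); [| apply Hmono; lra].
  destruct (Rlt_le_dec W (f t1)) as [Hlt | Hle]; [exact Hlt | exfalso].
  destruct (MVT_gen f 1 t1 g) as [c [Hc Heqc]].
  - intros x Hx. apply Hd. rewrite Rmin_left in Hx by lra. lra.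
  - intros x Hx. rewrite Rmin_left in Hx by lra.
    apply continuity_pt_filterlim, (continuous_of_is_derive _ _ _ (Hd x ltac:(lra))).
  - rewrite Rmin_left, Rmax_right in Hc by lra.
    assert (Hgc : beta <= g c) by (apply Hg; [lra | apply Rle_trans with (f t1); [apply Hmono |]; lra]).
    assert (beta * (t1 - 1) <= g c * (t1 - 1)) by (apply Rmult_le_compat_r; lra).
    assert (beta * (t1 - 1) = Rmax 0 (W - f 1) + 1) by (unfold t1; field; lra).
    lra.
Qed.

Definition masked_sum {P : Type} (c : P -> nat) (T : P -> (nat -> R) -> R) (l : list P)
    (x : nat -> R) (i : nat) : R :=
  fold_right Rplus 0 (map (fun p => if Nat.eqb (c p) i then T p x else 0) l).

Section MaskedSum.

Variables (P : Type) (c : P -> nat) (T : P -> (nat -> R) -> R).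

Lemma masked_sum_lipschitz n M l :
  (forall p, In p l -> exists L, 0 <= L /\ lipschitz_on_box n M L (T p)) ->
  exists L, 0 <= L /\ forall i, lipschitz_on_box n M L (fun x => masked_sum c T l x i).
Proof.
  induction l as [|p l IH]; intros H.
  - exists 0. split; [lra |]. intros i x y d _ _ Hd _. unfold masked_sum. simpl.
    rewrite Rminus_diag, Rabs_R0. lra.
  - destruct IH as [L1 [HL1 H1]]; [intros p' Hp'; apply H; right; exact Hp' |].
    destruct (H p (or_introl eq_refl)) as [L2 [HL2 H2]].
    exists (L2 + L1). split; [lra |]. intros i x y d Hx Hy Hd Hc. unfold masked_sum. simpl.
    fold (masked_sum c T l x i) (masked_sum c T l y i).
    specialize (H1 i x y d Hx Hy Hd Hc).
    assert (Rabs ((if c p =? i then T p x else 0) - (if c p =? i then T p y else 0)) <= L2 * d).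
    { destruct (c p =? i); [apply H2; assumption | rewrite Rminus_diag, Rabs_R0; nra]. }
    cbv beta in H1.
    replace ((if c p =? i then T p x else 0) + masked_sum c T l x i
             - ((if c p =? i then T p y else 0) + masked_sum c T l y i))
      with (((if c p =? i then T p x else 0) - (if c p =? i then T p y else 0))
            + (masked_sum c T l x i - masked_sum c T l y i)) by ring.
    eapply Rle_trans; [apply Rabs_triang | lra].
Qed.

Lemma masked_sum_linear_growth n b l : 0 <= b ->
  (forall p, In p l -> exists a, 0 <= a /\
     forall M x, 0 <= M -> in_box n M x -> 0 <= T p x <= a + b * M) ->
  exists A, 0 <= A /\ forall M x i, 0 <= M -> in_box n M x ->
    0 <= masked_sum c T l x i <= A + b * INR (length l) * M.
Proof.
  intros Hb. induction l as [|p l IH]; intros H.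
  - exists 0. split; [lra |]. intros. unfold masked_sum. simpl. lra.
  - destruct IH as [A1 [HA1 H1]]; [intros p' Hp'; apply H; right; exact Hp' |].
    destruct (H p (or_introl eq_refl)) as [a [Ha H2]].
    exists (a + A1). split; [lra |]. intros M x i HM Hx. unfold masked_sum.
    cbn [map fold_right length]. fold (masked_sum c T l x i).
    specialize (H1 M x i HM Hx). specialize (H2 M x HM Hx).
    rewrite S_INR. destruct (c p =? i); nra.
Qed.

Lemma masked_sum_nonneg l x i : (forall p, In p l -> 0 <= T p x) -> 0 <= masked_sum c T l x i.
Proof.
  induction l as [|p l IH]; intros H; unfold masked_sum; simpl; [lra |].
  fold (masked_sum c T l x i).
  assert (0 <= masked_sum c T l x i) by (apply IH; intros; apply H; right; assumption).
  assert (0 <= T p x) by (apply H; left; reflexivity).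
  destruct (c p =? i); lra.
Qed.

Lemma masked_sum_ge_term l x p0 : (forall p, In p l -> 0 <= T p x) -> In p0 l ->
  T p0 x <= masked_sum c T l x (c p0).
Proof.
  induction l as [|p l IH]; intros H Hin; [destruct Hin |].
  unfold masked_sum; simpl. fold (masked_sum c T l x (c p0)).
  assert (0 <= T p x) by (apply H; left; reflexivity).
  destruct Hin as [<- | Hin].
  - rewrite Nat.eqb_refl.
    assert (0 <= masked_sum c T l x (c p))
      by (apply masked_sum_nonneg; intros; apply H; right; assumption).
    lra.
  - assert (T p0 x <= masked_sum c T l x (c p0)) by (apply IH; [intros; apply H; right |]; assumption).
    destruct (c p =? c p0); lra.
Qed.

Lemma is_lim_masked_sum l (w : R -> nat -> R) i :
  (forall p, In p l -> is_lim (fun t => T p (w t)) p_infty 0) ->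
  is_lim (fun t => masked_sum c T l (w t) i) p_infty 0.
Proof.
  induction l as [|p l IH]; intros H; unfold masked_sum; simpl; [apply is_lim_const |].
  replace (Finite 0) with (Finite (0 + 0)) by (f_equal; ring).
  apply is_lim_plus'; [| apply IH; intros; apply H; right; assumption].
  destruct (c p =? i); [apply H; left; reflexivity | apply is_lim_const].
Qed.

End MaskedSum.

Lemma nxt_nxt2 k : (k < 3)%nat ->
  (nxt k < 3)%nat /\ (nxt2 k < 3)%nat /\ nxt (nxt k) = nxt2 k /\ nxt2 (nxt k) = k /\
  nxt (nxt2 k) = k /\ nxt2 (nxt2 k) = nxt k.
Proof. intros Hk. unfold nxt, nxt2. destruct k as [|[|[|k]]]; simpl; repeat split; lia. Qed.

Lemma in_corners_list nF f k : In (f, k) (corners_list nF) <-> (f < nF)%nat /\ (k < 3)%nat.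
Proof. unfold corners_list. rewrite in_prod_iff, !in_seq. lia. Qed.

Lemma cosh_half_len_same_unordered l0 ends x e a b : same_unordered (ends e) a b ->
  cosh_half_len l0 ends x e = exp (x a + x b) * cosh (l0 e / 2).
Proof.
  intros [[H1 H2] | [H1 H2]]; unfold cosh_half_len; rewrite H1, H2; [| rewrite Rplus_comm];
    reflexivity.
Qed.

Lemma one_lt_cosh z : 0 < z -> 1 < cosh z.
Proof.
  intros Hz. unfold cosh. rewrite exp_Ropp.
  assert (H := exp_increasing 0 z Hz). rewrite exp_0 in H.
  set (E := exp z) in *. assert (0 < / E) by (apply Rinv_0_lt_compat; lra).
  assert (E * / E = 1) by (field; lra). assert (0 < (E - 1) * (E - 1)) by nra. nra.
Qed.

Section Triangulation.

Variables (n nE nF : nat) (corner side : nat -> nat -> nat) (ends : nat -> nat * nat).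
Variable l0 : nat -> R.
Hypothesis T_ideal : ideal_triangulation n nE nF corner side ends.
Hypothesis l0_pos : forall e, (e < nE)%nat -> 0 < l0 e.

Lemma face_data f k : (f < nF)%nat -> (k < 3)%nat ->
  (corner f k < n)%nat /\ (corner f (nxt k) < n)%nat /\ (corner f (nxt2 k) < n)%nat /\
  (side f k < nE)%nat /\ (side f (nxt k) < nE)%nat /\ (side f (nxt2 k) < nE)%nat /\
  same_unordered (ends (side f k)) (corner f (nxt k)) (corner f (nxt2 k)) /\
  same_unordered (ends (side f (nxt k))) (corner f (nxt2 k)) (corner f k) /\
  same_unordered (ends (side f (nxt2 k))) (corner f k) (corner f (nxt k)).
Proof.
  destruct T_ideal as (T1 & _ & T3 & _). intros Hf Hk.
  destruct (nxt_nxt2 k Hk) as (N1 & N2 & N3 & N4 & N5 & N6).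
  destruct (T1 f k Hf Hk), (T1 f (nxt k) Hf N1), (T1 f (nxt2 k) Hf N2).
  assert (S1 := T3 f k Hf Hk).
  assert (S2 := T3 f (nxt k) Hf N1). rewrite N3, N4 in S2.
  assert (S3 := T3 f (nxt2 k) Hf N2). rewrite N5, N6 in S3.
  tauto.
Qed.

Lemma ends_lt e : (e < nE)%nat -> (fst (ends e) < n)%nat /\ (snd (ends e) < n)%nat.
Proof.
  intros He. destruct T_ideal as (_ & T2 & _).
  specialize (T2 e He).
  destruct (filter (fun p => Nat.eqb (side (fst p) (snd p)) e) (corners_list nF))
    as [|[f k] l] eqn:Hfl; [discriminate |].
  assert (Hin : In (f, k) (filter (fun p => Nat.eqb (side (fst p) (snd p)) e) (corners_list nF)))
    by (rewrite Hfl; left; reflexivity).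
  apply filter_In in Hin. destruct Hin as [Hin Heq]. apply Nat.eqb_eq in Heq. simpl in Heq.
  apply in_corners_list in Hin. destruct Hin as [Hf Hk].
  destruct (face_data f k Hf Hk) as (P1 & P2 & P3 & _ & _ & _ & S1 & _).
  rewrite Heq in S1. destruct S1 as [[-> ->] | [-> ->]]; split; assumption.
Qed.

Lemma metric_ok_of_nonneg x : (forall j, (j < n)%nat -> 0 <= x j) -> metric_ok nE l0 ends x.
Proof.
  intros Hx e He. unfold cosh_half_len. destruct (ends_lt e He) as [E1 E2].
  assert (1 <= exp (x (fst (ends e)) + x (snd (ends e))))
    by (apply one_le_exp; assert (H1 := Hx _ E1); assert (H2 := Hx _ E2); lra).
  assert (1 < cosh (l0 e / 2)) by (apply one_lt_cosh; assert (Hl := l0_pos e He); lra).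
  nra.
Qed.

Definition face_arc (f k : nat) : (nat -> R) -> R :=
  boundary_arc (corner f k) (corner f (nxt k)) (corner f (nxt2 k))
    (cosh (l0 (side f k) / 2)) (cosh (l0 (side f (nxt k)) / 2)) (cosh (l0 (side f (nxt2 k)) / 2)).

Lemma face_arc_data f k : (f < nF)%nat -> (k < 3)%nat ->
  (corner f k < n)%nat /\ (corner f (nxt k) < n)%nat /\ (corner f (nxt2 k) < n)%nat /\
  1 < cosh (l0 (side f k) / 2) /\ 1 < cosh (l0 (side f (nxt k)) / 2) /\
  1 < cosh (l0 (side f (nxt2 k)) / 2).
Proof.
  intros Hf Hk. destruct (face_data f k Hf Hk) as (P1 & P2 & P3 & E1 & E2 & E3 & _).
  repeat split; try assumption; apply one_lt_cosh;
    [assert (H := l0_pos _ E1) | assert (H := l0_pos _ E2) | assert (H := l0_pos _ E3)]; lra.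
Qed.

(* For [x >= 0] all half-length coshes are [>= 1], so [cosh]/[sinh] of [2 * arccosh] are
   polynomial in them. *)
Lemma theta_eq_face_arc f k x : (f < nF)%nat -> (k < 3)%nat ->
  (forall j, (j < n)%nat -> 0 <= x j) -> theta l0 ends side x f k = face_arc f k x.
Proof.
  intros Hf Hk Hx.
  destruct (face_data f k Hf Hk) as (P1 & P2 & P3 & _ & _ & _ & S1 & S2 & S3).
  destruct (face_arc_data f k Hf Hk) as (_ & _ & _ & C1 & C2 & C3).
  unfold theta, len.
  rewrite (cosh_half_len_same_unordered l0 ends x _ _ _ S1),
          (cosh_half_len_same_unordered l0 ends x _ _ _ S2),
          (cosh_half_len_same_unordered l0 ends x _ _ _ S3).
  assert (Hge1 : forall a b c, (a < n)%nat -> (b < n)%nat -> 1 < c -> 1 <= exp (x a + x b) * c).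
  { intros a b c Ha Hb Hc.
    assert (1 <= exp (x a + x b))
      by (apply one_le_exp; assert (Ha' := Hx a Ha); assert (Hb' := Hx b Hb); lra).
    nra. }
  destruct (cosh_sinh_double_arccosh _ (Hge1 _ _ _ P2 P3 C1)) as [Ca _].
  destruct (cosh_sinh_double_arccosh _ (Hge1 _ _ _ P3 P1 C2)) as [Cb Sb].
  destruct (cosh_sinh_double_arccosh _ (Hge1 _ _ _ P1 P2 C3)) as [Cc Sc].
  rewrite Ca, Cb, Cc, Sb, Sc. reflexivity.
Qed.

Let B := Blen nF l0 ends corner side.

Let arc (p : nat * nat) (x : nat -> R) : R := theta l0 ends side x (fst p) (snd p).

Lemma Blen_eq_masked_sum x i :
  B x i = masked_sum (fun p => corner (fst p) (snd p)) arc (corners_list nF) x i.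
Proof. reflexivity. Qed.

Lemma Blen_box_lipschitz : box_lipschitz n B.
Proof.
  intros M HM.
  destruct (masked_sum_lipschitz _ (fun p => corner (fst p) (snd p)) arc n M (corners_list nF))
    as [L [HL HLip]].
  - intros [f k] Hin. apply in_corners_list in Hin. destruct Hin as [Hf Hk].
    destruct (face_arc_data f k Hf Hk) as (P1 & P2 & P3 & C1 & C2 & C3).
    destruct (bounded_lipschitz_boundary_arc n _ _ _ _ _ _ P1 P2 P3 C1 C2 C3 M HM)
      as [L [_ (HL & _ & _ & HLip)]].
    exists L. split; [exact HL |]. intros x y d Hx Hy Hd Hc. unfold arc. simpl.
    rewrite !theta_eq_face_arc by (assumption || (intros j Hj; apply Hx || apply Hy; exact Hj)).
    apply HLip; assumption.
  - exists L. split; [exact HL |]. intros i _. apply HLip.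
Qed.

Lemma Blen_linear_growth : exists A C, 0 <= A /\ 0 < C /\ nonneg_linear_growth n B A C.
Proof.
  destruct (masked_sum_linear_growth _ (fun p => corner (fst p) (snd p)) arc n 8 (corners_list nF))
    as [A [HA Hg]]; [lra | |].
  - intros [f k] Hin. apply in_corners_list in Hin. destruct Hin as [Hf Hk].
    destruct (face_arc_data f k Hf Hk) as (P1 & P2 & P3 & C1 & C2 & C3).
    destruct (boundary_arc_linear_growth n _ _ _ _ _ _ P1 P2 P3 C1 C2 C3) as [a [Ha Hga]].
    exists a. split; [exact Ha |]. intros M x HM Hx. unfold arc. simpl.
    rewrite theta_eq_face_arc by (assumption || (intros j Hj; apply Hx, Hj)).
    apply Hga; assumption.
  - exists A, (8 * INR (length (corners_list nF)) + 1).
    assert (H := pos_INR (length (corners_list nF))).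
    split; [exact HA | split; [lra |]]. intros M x i HM Hx _.
    rewrite Blen_eq_masked_sum. destruct (Hg M x i HM Hx). split; nra.
Qed.

Lemma Blen_lower_bound i W : (i < n)%nat -> exists beta, 0 < beta /\
  forall x, (forall j, (j < n)%nat -> 0 <= x j) -> x i <= W -> beta <= B x i.
Proof.
  intros Hi. destruct T_ideal as (_ & _ & _ & T4).
  destruct (T4 i Hi) as [f [k [Hf [Hk <-]]]].
  destruct (face_arc_data f k Hf Hk) as (P1 & P2 & P3 & C1 & C2 & C3).
  destruct (boundary_arc_lower_bound (corner f k) (corner f (nxt k)) (corner f (nxt2 k))
              _ _ _ C1 C2 C3 W) as [beta [Hbeta Hlow]].
  exists beta. split; [exact Hbeta |]. intros x Hx HW.
  assert (Hin : In (f, k) (corners_list nF)) by (apply in_corners_list; split; assumption).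
  eapply Rle_trans; [| rewrite Blen_eq_masked_sum;
    apply (masked_sum_ge_term _ (fun p => corner (fst p) (snd p)) arc _ x (f, k)); [| exact Hin]].
  - unfold arc. simpl. rewrite theta_eq_face_arc by assumption. apply Hlow; auto.
  - intros [f' k'] Hin'. apply in_corners_list in Hin'. destruct Hin' as [Hf' Hk'].
    unfold arc. simpl. rewrite theta_eq_face_arc by assumption.
    destruct (face_arc_data f' k' Hf' Hk') as (Q1 & Q2 & Q3 & D1 & D2 & D3).
    apply boundary_arc_nonneg; auto.
Qed.

Lemma is_lim_theta_of_diverging (w : R -> nat -> R) :
  (forall t j, 0 <= t -> (j < n)%nat -> 0 <= w t j) ->
  (forall j, (j < n)%nat -> forall W, exists T0, forall t, T0 < t -> W < w t j) ->
  forall f k, (f < nF)%nat -> (k < 3)%nat ->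
    is_lim (fun t => theta l0 ends side (w t) f k) p_infty 0.
Proof.
  intros Hw Hdiv f k Hf Hk.
  destruct (face_arc_data f k Hf Hk) as (P1 & P2 & P3 & C1 & C2 & C3).
  apply filterlim_locally. intros eps.
  destruct (boundary_arc_small (corner f k) (corner f (nxt k)) (corner f (nxt2 k))
              _ _ _ C1 C2 C3 eps (cond_pos eps)) as [E0 HE0].
  destruct (Hdiv _ P1 (ln (Rmax 1 E0))) as [T0 HT0].
  exists (Rmax T0 0). intros t Ht. assert (H1 := Rmax_l T0 0). assert (H2 := Rmax_r T0 0).
  change (Rabs (theta l0 ends side (w t) f k - 0) < eps).
  assert (Hnn : forall j, (j < n)%nat -> 0 <= w t j) by (intros j Hj; apply Hw; [lra | exact Hj]).
  rewrite Rminus_0_r, theta_eq_face_arc by assumption.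
  rewrite Rabs_right by (apply Rle_ge, boundary_arc_nonneg; auto).
  apply HE0; auto.
  apply Rle_trans with (Rmax 1 E0); [apply Rmax_r |].
  rewrite <- (exp_ln (Rmax 1 E0)) by (assert (H := Rmax_l 1 E0); lra).
  apply exp_le, Rlt_le, HT0. lra.
Qed.

Lemma is_lim_Blen_of_diverging (w : R -> nat -> R) :
  (forall t j, 0 <= t -> (j < n)%nat -> 0 <= w t j) ->
  (forall j, (j < n)%nat -> forall W, exists T0, forall t, T0 < t -> W < w t j) ->
  forall i, is_lim (fun t => B (w t) i) p_infty 0.
Proof.
  intros Hw Hdiv i. apply (is_lim_ext (fun t => masked_sum (fun p => corner (fst p) (snd p)) arc
                                                   (corners_list nF) (w t) i)); [reflexivity |].
  apply is_lim_masked_sum. intros [f k] Hin. apply in_corners_list in Hin.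
  apply (is_lim_theta_of_diverging w Hw Hdiv); apply Hin.
Qed.

End Triangulation.

Theorem theorem3 (n nE nF : nat) (corner side : nat -> nat -> nat)
    (ends : nat -> nat * nat) (l0 : nat -> R) :
  ideal_triangulation n nE nF corner side ends ->
  (forall e, (e < nE)%nat -> 0 < l0 e) ->
  exists w : R -> nat -> R,
    (forall i, (i < n)%nat -> w 0 i = 0) /\
    (forall t, 0 <= t -> metric_ok nE l0 ends (w t)) /\
    (forall i, (i < n)%nat ->
       filterlim (fun s => w s i) (at_right 0) (locally (w 0 i))) /\
    (forall i t, (i < n)%nat -> 0 < t ->
       is_derive (fun s => w s i) t (Blen nF l0 ends corner side (w t) i)) /\
    (forall i, (i < n)%nat ->
       is_lim (fun t => Blen nF l0 ends corner side (w t) i) p_infty 0) /\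
    (forall f k, (f < nF)%nat -> (k < 3)%nat ->
       is_lim (fun t => theta l0 ends side (w t) f k) p_infty 0).
Proof.
  intros Htri Hl0.
  set (B := Blen nF l0 ends corner side).
  destruct (Blen_linear_growth n nE nF corner side ends l0 Htri Hl0) as (A & C & HA & HC & Hgrowth).
  assert (Hlip := Blen_box_lipschitz n nE nF corner side ends l0 Htri Hl0).
  set (w := picard_limit B).
  assert (Hw : forall t j, 0 <= t -> (j < n)%nat -> 0 <= w t j)
    by (intros t j Ht Hj; apply (picard_limit_in_box n B A C); assumption).
  assert (Hdiv : forall j, (j < n)%nat -> forall W, exists T0, forall t, T0 < t -> W < w t j).
  { intros j Hj. apply (diverges_of_derive_lower_bound _ (fun t => B (w t) j)).
    - intros t Ht. apply (is_derive_picard_limit n B A C); assumption.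
    - intros s t Hst. apply (picard_limit_nondecreasing n B A C); assumption.
    - intros W. destruct (Blen_lower_bound n nE nF corner side ends l0 Htri Hl0 j W Hj)
        as [beta [Hbeta Hlow]].
      exists beta. split; [exact Hbeta |]. intros t Ht HW.
      apply Hlow; [intros j' Hj'; apply Hw; [lra | exact Hj'] | exact HW]. }
  exists w. split; [| split; [| split; [| split; [| split]]]].
  - intros i _. apply picard_limit_0.
  - intros t Ht. apply (metric_ok_of_nonneg n nE nF corner side ends l0 Htri Hl0).
    intros j Hj. apply Hw; assumption.
  - intros i Hi. apply (picard_limit_right_continuous_0 n B A C); assumption.
  - intros i t Hi Ht. apply (is_derive_picard_limit n B A C); assumption.
  - intros i _. apply (is_lim_Blen_of_diverging n nE nF corner side ends l0 Htri Hl0 w Hw Hdiv).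
  - apply (is_lim_theta_of_diverging n nE nF corner side ends l0 Htri Hl0 w Hw Hdiv).
Qed.
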